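(* Let $p\ge0$, $\Omega>0$, $S\in\mathcal B_\Omega$, $x\in[0,\pi]$. Then the operator $\tilde Q(x)T^{-1}$ maps $m$ into $l_2$, and for every $f\in m$, $$\|\tilde Q(x)T^{-1}f\|_{l_2}\le C\|f\|_m,$$ where $C$ depends only on $p$ and $\Omega$.
   Context: $\mathcal S_p$: collections $S=\{\lambda_n,\alpha_n\}_{n\ge1}$ of complex numbers with $\rho_n:=\sqrt{\lambda_n}$ ($\arg\rho_n\in[-\pi/2,\pi/2)$), $\rho_n=n-p-1+\varkappa_n$, $\alpha_n=2/\pi+\kappa_n$, $\{\varkappa_n\},\{\kappa_n\}\in l_2$. Model data: $\tilde\rho_n=0$ for $n\le p+1$, $\tilde\rho_n=n-p-1$ for $n\ge p+1$, $\tilde\lambda_n=\tilde\rho_n^2$; $\tilde\alpha_1=1/\pi$, $\tilde\alpha_n=0$ for $2\le n\le p+1$, $\tilde\alpha_n=2/\pi$ for $n\ge p+2$. $\xi_n=|\rho_n-\tilde\rho_n|+|\alpha_n-\tilde\alpha_n|$, $\mathcal B_\Omega=\{S\in\mathcal S_p:(\sum\xi_n^2)^{1/2}\le\Omega\}$. Notation: $\lambda_{n0}=\lambda_n,\rho_{n0}=\rho_n,\alpha_{n0}=\alpha_n$, $\lambda_{n1}=\tilde\lambda_n,\rho_{n1}=\tilde\rho_n,\alpha_{n1}=\tilde\alpha_n$, $\hat\rho_n=\rho_n-\tilde\rho_n$; $\tilde D(x,\lambda,\mu)=\int_0^x\cos(\sqrt\lambda t)\cos(\sqrt\mu t)dt$;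 $\tilde Q_{ni,kj}(x)=\alpha_{kj}\tilde D(x,\rho_{ni}^2,\rho_{kj}^2)$; $\tilde Q_{nk}=\begin{pmatrix}\tilde Q_{n0,k0}&-\tilde Q_{n0,k1}\\ \tilde Q_{n1,k0}&-\tilde Q_{n1,k1}\end{pmatrix}$; $T_k^{-1}=\begin{pmatrix}\hat\rho_k&1\\0&1\end{pmatrix}$. $m$: Banach space of bounded sequences $f=(f_{ni})_{n\ge1,i=0,1}$ with $\|f\|_m=\sup|f_{ni}|$; $l_2$ is the space of square-summable sequences indexed by $(n,i)$. For $f\in m$, $(T^{-1}f)_n=T_n^{-1}f_n=(\hat\rho_nf_{n0}+f_{n1},f_{n1})^T$ and $(\tilde Q(x)T^{-1}f)_n=\sum_{k\ge1}\tilde Q_{nk}(x)T_k^{-1}f_k$, $f_k=(f_{k0},f_{k1})^T$. *)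

From Stdlib Require Import Reals.
From Coquelicot Require Import Coquelicot.
Open Scope R_scope.

Definition Ccos (z : C) : C :=
  (cos (Re z) * cosh (Im z), - (sin (Re z) * sinh (Im z))).

(* square root with the branch arg in [-pi/2, pi/2) used in the paper *)
Definition csqrt (z : C) : C :=
  (sqrt ((Cmod z + Re z) / 2),
   if Rlt_dec 0 (Im z) then sqrt ((Cmod z - Re z) / 2)
   else - sqrt ((Cmod z - Re z) / 2)).

Definition Dt (x : R) (lam mu : C) : C :=
  @RInt C_R_CompleteNormedModule
    (fun t => Cmult (Ccos (Cmult (csqrt lam) (RtoC t))) (Ccos (Cmult (csqrt mu) (RtoC t))))
    0 x.

(* Data S = {lam_n, alpha_n}_{n>=1} : sequences nat -> C, only indices n >= 1 are used. *)
Definition rho (lam : nat -> C) (n : nat) : C := csqrt (lam n).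

Definition rho_t (p n : nat) : C :=
  if (n <=? p + 1)%nat then RtoC 0 else RtoC (INR n - INR p - 1).
Definition lam_t (p n : nat) : C := Cmult (rho_t p n) (rho_t p n).
Definition alpha_t (p n : nat) : C :=
  if (n =? 1)%nat then RtoC (1 / PI)
  else if (n <=? p + 1)%nat then RtoC 0 else RtoC (2 / PI).

Definition in_Sp (p : nat) (lam alpha : nat -> C) : Prop :=
  ex_series (fun n => (Cmod (Cminus (rho lam (S n)) (RtoC (INR (S n) - INR p - 1)))) ^ 2) /\
  ex_series (fun n => (Cmod (Cminus (alpha (S n)) (RtoC (2 / PI)))) ^ 2).

Definition xi (p : nat) (lam alpha : nat -> C) (n : nat) : R :=
  Cmod (Cminus (rho lam n) (rho_t p n)) + Cmod (Cminus (alpha n) (alpha_t p n)).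

Definition in_B (p : nat) (Om : R) (lam alpha : nat -> C) : Prop :=
  in_Sp p lam alpha /\
  sqrt (Series (fun n => (xi p lam alpha (S n)) ^ 2)) <= Om.

(* index i in {0,1} encoded as bool: false = 0 (data S), true = 1 (model data) *)
Definition rhoi (p : nat) (lam : nat -> C) (n : nat) (i : bool) : C :=
  if i then rho_t p n else rho lam n.
Definition alphai (p : nat) (alpha : nat -> C) (n : nat) (i : bool) : C :=
  if i then alpha_t p n else alpha n.

Definition Qt (p : nat) (lam alpha : nat -> C) (x : R) (n : nat) (i : bool) (k : nat) (j : bool) : C :=
  Cmult (alphai p alpha k j)
        (Dt x (Cmult (rhoi p lam n i) (rhoi p lam n i)) (Cmult (rhoi p lam k j) (rhoi p lam k j))).

Definition rhohat (p : nat) (lam : nat -> C) (k : nat) : C := Cminus (rho lam k) (rho_t p k).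

(* i-th component of tilde Q_{nk}(x) T_k^{-1} f_k, with
   T_k^{-1} f_k = (rhohat_k f_{k0} + f_{k1}, f_{k1}) and
   tilde Q_{nk} = [[Q_{n0,k0}, -Q_{n0,k1}], [Q_{n1,k0}, -Q_{n1,k1}]] *)
Definition QTterm (p : nat) (lam alpha : nat -> C) (x : R) (f : nat -> bool -> C)
    (n : nat) (i : bool) (k : nat) : C :=
  Cminus (Cmult (Qt p lam alpha x n i k false)
                (Cplus (Cmult (rhohat p lam k) (f k false)) (f k true)))
         (Cmult (Qt p lam alpha x n i k true) (f k true)).

Definition in_m (f : nat -> bool -> C) : Prop :=
  exists M : R, forall n i, (1 <= n)%nat -> Cmod (f n i) <= M.

Definition norm_m (f : nat -> bool -> C) : R :=
  real (Lub_Rbar (fun r => exists n i, (1 <= n)%nat /\ r = Cmod (f n i))).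

Definition in_l2 (g : nat -> bool -> C) : Prop :=
  ex_series (fun n => (Cmod (g (S n) false)) ^ 2 + (Cmod (g (S n) true)) ^ 2).

Definition norm_l2 (g : nat -> bool -> C) : R :=
  sqrt (Series (fun n => (Cmod (g (S n) false)) ^ 2 + (Cmod (g (S n) true)) ^ 2)).

(* Entry [((n,i),k)] of [Q(x) T^-1 f] is [int_0^x cos (rho_{ni} t) w_k(t) dt] for an
   explicit column function [w_k] ([cos] is even, so the branch of the square root is
   irrelevant).  Hence a block of row [n] is the integral of [cos (rho_{ni} t)] against
   the corresponding sum [W] of columns, and the theorem follows from two estimates.

   Rows: for [n > p + 1], [cos (rho_n t) = cos ((n - p - 1) t) + O(|rhohat_n|)] and the
   [cos (j t)], [j >= 1], are orthogonal on [[0, PI]], so Bessel's inequality bounds the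
   sum over rows of the squared entries by [C ||W||^2] in [L2(0, x)]; the finitely many
   remaining rows are bounded by Cauchy-Schwarz.

   Columns: for [k > p + 1] and [m = k - p - 1],
   [w_k(t) = a_k cos (m t) - d_k rhohat_k t sin (m t) + O(||f|| xi_k^2)] with
   [a_k = O(||f|| xi_k)], so orthogonality of the cosines and of the sines gives
   [||W||^2 <= C ||f||^2 sum xi_k^2]; the finitely many remaining columns are bounded
   pointwise.

   On blocks of columns far out this shows that every row series is Cauchy; on initial
   blocks it bounds all partial sums uniformly, and the [l2] bound passes to the limit. *)

From Stdlib Require Import Reals Lra Lia FunctionalExtensionality Arith ClassicalEpsilon.
From Coquelicot Require Import Coquelicot.
Open Scope R_scope.

Definition Rcontinuous (g : R -> R) : Prop := forall t, continuous g t.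

Lemma Rcontinuous_const c : Rcontinuous (fun _ => c).
Proof. intro t; apply continuous_const. Qed.
Lemma Rcontinuous_id : Rcontinuous (fun t => t).
Proof. intro t; apply continuous_id. Qed.
Lemma Rcontinuous_plus f g : Rcontinuous f -> Rcontinuous g -> Rcontinuous (fun t => f t + g t).
Proof. intros Hf Hg t; apply (continuous_plus f g); auto. Qed.
Lemma Rcontinuous_mult f g : Rcontinuous f -> Rcontinuous g -> Rcontinuous (fun t => f t * g t).
Proof. intros Hf Hg t; apply (continuous_mult f g); auto. Qed.
Lemma Rcontinuous_ext f g : (forall t, f t = g t) -> Rcontinuous f -> Rcontinuous g.
Proof. intros H Hf. replace g with f; auto. apply functional_extensionality; auto. Qed.
Lemma Rcontinuous_opp f : Rcontinuous f -> Rcontinuous (fun t => - f t).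
Proof.
  intros Hf. apply (Rcontinuous_ext (fun t => (-1) * f t)); [intros; ring|].
  apply Rcontinuous_mult; auto using Rcontinuous_const.
Qed.
Lemma Rcontinuous_minus f g : Rcontinuous f -> Rcontinuous g -> Rcontinuous (fun t => f t - g t).
Proof. intros; apply Rcontinuous_plus; auto using Rcontinuous_opp. Qed.
Lemma Rcontinuous_pow2 f : Rcontinuous f -> Rcontinuous (fun t => f t ^ 2).
Proof.
  intros; apply (Rcontinuous_ext (fun t => f t * f t)); [intros; ring|apply Rcontinuous_mult; auto].
Qed.
Lemma Rcontinuous_cos f : Rcontinuous f -> Rcontinuous (fun t => cos (f t)).
Proof. intros Hf t; apply continuous_cos_comp; auto. Qed.
Lemma Rcontinuous_sin f : Rcontinuous f -> Rcontinuous (fun t => sin (f t)).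
Proof. intros Hf t; apply continuous_sin_comp; auto. Qed.
Lemma Rcontinuous_exp f : Rcontinuous f -> Rcontinuous (fun t => exp (f t)).
Proof. intros Hf t; apply continuous_exp_comp; auto. Qed.

Ltac Rcontinuous_tac :=
  repeat match goal with
  | |- Rcontinuous (fun _ => ?c) => apply (Rcontinuous_const c)
  | |- Rcontinuous (fun t => t) => apply Rcontinuous_id
  | |- Rcontinuous (fun t => @?f t + @?g t) => apply (Rcontinuous_plus f g)
  | |- Rcontinuous (fun t => @?f t - @?g t) => apply (Rcontinuous_minus f g)
  | |- Rcontinuous (fun t => @?f t * @?g t) => apply (Rcontinuous_mult f g)
  | |- Rcontinuous (fun t => - @?f t) => apply (Rcontinuous_opp f)
  | |- Rcontinuous (fun t => @?f t ^ 2) => apply (Rcontinuous_pow2 f)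
  | |- Rcontinuous (fun t => cos (@?f t)) => apply (Rcontinuous_cos f)
  | |- Rcontinuous (fun t => sin (@?f t)) => apply (Rcontinuous_sin f)
  | |- Rcontinuous (fun t => exp (@?f t)) => apply (Rcontinuous_exp f)
  | |- Rcontinuous (fun t => cosh (@?f t)) => unfold cosh
  | |- Rcontinuous (fun t => sinh (@?f t)) => unfold sinh
  | |- Rcontinuous (fun t => (@?f t) / 2) => unfold Rdiv
  | H : Rcontinuous ?g |- Rcontinuous ?g => exact H
  end.

Lemma ex_RInt_Rcontinuous a b f : Rcontinuous f -> ex_RInt f a b.
Proof.
  intros Hf. apply (ex_RInt_continuous (V:=R_CompleteNormedModule)). intros; apply Hf.
Qed.

Definition int0 (x : R) (g : R -> R) : R := RInt g 0 x.

Section Int0.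
Variable x : R.

Lemma int0_plus f g : Rcontinuous f -> Rcontinuous g ->
  int0 x (fun t => f t + g t) = int0 x f + int0 x g.
Proof.
  intros; apply (RInt_plus (V:=R_CompleteNormedModule)); apply ex_RInt_Rcontinuous; auto.
Qed.
Lemma int0_scal c f : Rcontinuous f -> int0 x (fun t => c * f t) = c * int0 x f.
Proof. intros; apply (RInt_scal (V:=R_CompleteNormedModule)); auto using ex_RInt_Rcontinuous. Qed.
Lemma int0_opp f : Rcontinuous f -> int0 x (fun t => - f t) = - int0 x f.
Proof. intros; apply (RInt_opp (V:=R_CompleteNormedModule)); auto using ex_RInt_Rcontinuous. Qed.
Lemma int0_minus f g : Rcontinuous f -> Rcontinuous g ->
  int0 x (fun t => f t - g t) = int0 x f - int0 x g.
Proof.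
  intros; apply (RInt_minus (V:=R_CompleteNormedModule)); apply ex_RInt_Rcontinuous; auto.
Qed.
Lemma int0_ext f g : (forall t, f t = g t) -> int0 x f = int0 x g.
Proof. intros H; apply RInt_ext; intros; auto. Qed.
Lemma int0_const c : int0 x (fun _ => c) = x * c.
Proof. unfold int0. rewrite RInt_const. unfold scal; simpl; unfold mult; simpl. ring. Qed.

Hypothesis Hx : 0 <= x.

Lemma int0_le f g : Rcontinuous f -> Rcontinuous g ->
  (forall t, 0 <= t <= x -> f t <= g t) -> int0 x f <= int0 x g.
Proof. intros. apply RInt_le; auto using ex_RInt_Rcontinuous. intros; apply H1; lra. Qed.
Lemma int0_ge0 f : Rcontinuous f -> (forall t, 0 <= t <= x -> 0 <= f t) -> 0 <= int0 x f.
Proof.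
  intros. replace 0 with (int0 x (fun _ => 0)) by (rewrite int0_const; ring).
  apply int0_le; auto using Rcontinuous_const.
Qed.

Lemma int0_sq_ge0 f : Rcontinuous f -> 0 <= int0 x (fun t => f t ^ 2).
Proof. intros; apply int0_ge0; [Rcontinuous_tac|intros; apply pow2_ge_0]. Qed.

Lemma int0_le_upper y f : x <= y -> Rcontinuous f -> (forall t, 0 <= t <= y -> 0 <= f t) ->
  int0 x f <= int0 y f.
Proof.
  intros Hxy Hf Hp. unfold int0.
  rewrite <- (RInt_Chasles f 0 x y); auto using ex_RInt_Rcontinuous.
  assert (0 <= RInt f x y).
  { apply RInt_ge_0; auto using ex_RInt_Rcontinuous. intros; apply Hp; lra. }
  unfold plus; simpl. lra.
Qed.

Lemma quadratic_nonneg_discriminant a b c : 0 <= c ->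
  (forall l, 0 <= a - 2 * l * b + l * l * c) -> b * b <= a * c.
Proof.
  intros Hc H. destruct (Req_dec c 0) as [E|E].
  - subst c. destruct (Req_dec b 0) as [Eb|Eb]; [subst; nra|].
    specialize (H ((a + 1) / (2 * b))).
    assert (2 * ((a + 1) / (2 * b)) * b = a + 1) by (field; auto). nra.
  - specialize (H (b / c)).
    assert (2 * (b / c) * b = 2 * (b * b / c)) by (field; auto).
    assert (b / c * (b / c) * c = b * b / c) by (field; auto).
    assert (b * b = (b * b / c) * c) by (field; auto).
    nra.
Qed.

Lemma int0_cauchy_schwarz f g : Rcontinuous f -> Rcontinuous g ->
  int0 x (fun t => f t * g t) ^ 2 <= int0 x (fun t => f t ^ 2) * int0 x (fun t => g t ^ 2).
Proof.
  intros Hf Hg. rewrite Rmult_comm, <- Rsqr_pow2.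
  apply quadratic_nonneg_discriminant; [apply int0_sq_ge0; auto|].
  intros l.
  replace (int0 x (fun t => g t ^ 2) - 2 * l * int0 x (fun t => f t * g t) +
           l * l * int0 x (fun t => f t ^ 2))
    with (int0 x (fun t => (g t - l * f t) ^ 2)).
  - apply int0_sq_ge0; Rcontinuous_tac.
  - rewrite (int0_ext _ (fun t => (g t ^ 2 - (2 * l) * (f t * g t)) + (l * l) * (f t ^ 2)))
      by (intros; ring).
    rewrite int0_plus, int0_minus, !int0_scal; auto; Rcontinuous_tac.
Qed.

End Int0.

(** * Orthogonal systems on [0, PI] and Bessel's inequality *)

(* [rsum f n] has [n] terms; unlike [sum_n] it allows empty sums. *)
Fixpoint rsum (f : nat -> R) (n : nat) : R :=
  match n with O => 0 | S n => rsum f n + f n end.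

Lemma rsum_ext f g n : (forall k, (k < n)%nat -> f k = g k) -> rsum f n = rsum g n.
Proof. induction n; simpl; intros; auto. rewrite IHn, H; auto. Qed.
Lemma rsum_le f g n : (forall k, (k < n)%nat -> f k <= g k) -> rsum f n <= rsum g n.
Proof.
  induction n; simpl; intros H; [lra|].
  specialize (IHn (fun k h => H k (Nat.lt_lt_succ_r _ _ h))).
  specialize (H n (Nat.lt_succ_diag_r n)). lra.
Qed.
Lemma rsum_zero n : rsum (fun _ => 0) n = 0.
Proof. induction n; simpl; auto. rewrite IHn; ring. Qed.
Lemma rsum_ge0 f n : (forall k, (k < n)%nat -> 0 <= f k) -> 0 <= rsum f n.
Proof. intros. rewrite <- (rsum_zero n). apply rsum_le; auto. Qed.
Lemma rsum_plus f g n : rsum (fun k => f k + g k) n = rsum f n + rsum g n.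
Proof. induction n; simpl; [ring|rewrite IHn; ring]. Qed.
Lemma rsum_scal c f n : rsum (fun k => c * f k) n = c * rsum f n.
Proof. induction n; simpl; [ring|rewrite IHn; ring]. Qed.
Lemma rsum_const c n : rsum (fun _ => c) n = INR n * c.
Proof. induction n; simpl; [ring|rewrite IHn; destruct n; simpl; ring]. Qed.
Lemma rsum_split f a b : rsum f (a + b) = rsum f a + rsum (fun k => f (a + k)%nat) b.
Proof.
  induction b; simpl; [rewrite Nat.add_0_r; ring|].
  rewrite Nat.add_succ_r; simpl; rewrite IHb; ring.
Qed.
Lemma rsum_le_length f a b : (forall k, 0 <= f k) -> (a <= b)%nat -> rsum f a <= rsum f b.
Proof.
  intros H Hab. replace b with (a + (b - a))%nat by lia. rewrite rsum_split.
  assert (0 <= rsum (fun k => f (a + k)%nat) (b - a)) by (apply rsum_ge0; auto). lra.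
Qed.
Lemma rsum_sum_n (f : nat -> R) m : rsum f (S m) = sum_n f m.
Proof. induction m; simpl; [rewrite sum_O; ring|rewrite sum_Sn, <- IHm; reflexivity]. Qed.

Lemma Rcontinuous_rsum (F : nat -> R -> R) n : (forall k, Rcontinuous (F k)) ->
  Rcontinuous (fun t => rsum (fun k => F k t) n).
Proof. intros H; induction n; simpl; Rcontinuous_tac; auto. Qed.
Lemma int0_rsum x (F : nat -> R -> R) n : (forall k, Rcontinuous (F k)) ->
  int0 x (fun t => rsum (fun k => F k t) n) = rsum (fun k => int0 x (F k)) n.
Proof.
  intros H; induction n; simpl; [rewrite int0_const; ring|].
  rewrite int0_plus, IHn; auto. apply Rcontinuous_rsum; auto.
Qed.

Lemma int0_PI_cos_int (z : Z) : z <> 0%Z -> int0 PI (fun t => cos (IZR z * t)) = 0.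
Proof.
  intros Hz. assert (Hz' : IZR z <> 0) by (apply not_0_IZR; auto).
  unfold int0. rewrite (is_RInt_unique _ _ _ (sin (IZR z * PI) / IZR z - sin (IZR z * 0) / IZR z)).
  - rewrite sin_eq_0_1 by (exists z; ring). rewrite Rmult_0_r, sin_0. field; auto.
  - apply (is_RInt_derive (V:=R_CompleteNormedModule) (fun t => sin (IZR z * t) / IZR z)).
    + intros t _. auto_derive; auto. field; auto.
    + intros t _. apply (Rcontinuous_cos (fun t => IZR z * t)); Rcontinuous_tac.
Qed.

Definition orth_system (phi : nat -> R -> R) : Prop :=
  (forall j, Rcontinuous (phi j)) /\
  (forall j k, j <> k -> int0 PI (fun t => phi j t * phi k t) = 0) /\
  (forall j, int0 PI (fun t => phi j t ^ 2) = PI / 2).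

Definition cos_mode (m : nat) (t : R) : R := cos (INR (S m) * t).
Definition sin_mode (m : nat) (t : R) : R := sin (INR (S m) * t).

(* Products of modes are half-sums of cosines of integer frequencies [j - k] and [j + k]. *)
Lemma int0_PI_cos_freq_diff_sum (j k : nat) : j <> k ->
  int0 PI (fun t => cos ((INR (S j) - INR (S k)) * t)) = 0 /\
  int0 PI (fun t => cos ((INR (S j) + INR (S k)) * t)) = 0.
Proof.
  intros H. rewrite !INR_IZR_INZ, <- minus_IZR, <- plus_IZR.
  split; apply int0_PI_cos_int; lia.
Qed.

Lemma int0_PI_cos_double (j : nat) : int0 PI (fun t => cos (INR (S j + S j) * t)) = 0.
Proof. rewrite INR_IZR_INZ. apply int0_PI_cos_int. lia. Qed.

Lemma orth_system_cos : orth_system cos_mode.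
Proof.
  unfold cos_mode. split; [|split].
  - intros j; Rcontinuous_tac.
  - intros j k H. destruct (int0_PI_cos_freq_diff_sum j k H) as [H1 H2].
    rewrite (int0_ext _ _ (fun t => / 2 * cos ((INR (S j) - INR (S k)) * t) +
                                    / 2 * cos ((INR (S j) + INR (S k)) * t))).
    + rewrite int0_plus, !int0_scal, H1, H2; [ring|..]; Rcontinuous_tac.
    + intros t. rewrite Rmult_minus_distr_r, Rmult_plus_distr_r, cos_minus, cos_plus. field.
  - intros j.
    rewrite (int0_ext _ _ (fun t => / 2 * 1 + / 2 * cos (INR (S j + S j) * t))).
    + rewrite int0_plus, !int0_scal, int0_PI_cos_double, int0_const; [field|..]; Rcontinuous_tac.
    + intros t. rewrite plus_INR, Rmult_plus_distr_r, cos_plus.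
      pose proof (sin2_cos2 (INR (S j) * t)). unfold Rsqr in *. nra.
Qed.

Lemma orth_system_sin : orth_system sin_mode.
Proof.
  unfold sin_mode. split; [|split].
  - intros j; Rcontinuous_tac.
  - intros j k H. destruct (int0_PI_cos_freq_diff_sum j k H) as [H1 H2].
    rewrite (int0_ext _ _ (fun t => / 2 * cos ((INR (S j) - INR (S k)) * t) +
                                    (- / 2) * cos ((INR (S j) + INR (S k)) * t))).
    + rewrite int0_plus, !int0_scal, H1, H2; [ring|..]; Rcontinuous_tac.
    + intros t. rewrite Rmult_minus_distr_r, Rmult_plus_distr_r, cos_minus, cos_plus. field.
  - intros j.
    rewrite (int0_ext _ _ (fun t => / 2 * 1 + (- / 2) * cos (INR (S j + S j) * t))).
    + rewrite int0_plus, !int0_scal, int0_PI_cos_double, int0_const; [field|..]; Rcontinuous_tac.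
    + intros t. rewrite plus_INR, Rmult_plus_distr_r, cos_plus.
      pose proof (sin2_cos2 (INR (S j) * t)). unfold Rsqr in *. nra.
Qed.

Lemma orth_system_shift phi s : orth_system phi -> orth_system (fun j => phi (s + j)%nat).
Proof. intros [H1 [H2 H3]]. split; [|split]; intros; auto. apply H2. lia. Qed.

Definition trig_poly (phi : nat -> R -> R) (b : nat -> R) (M : nat) (t : R) : R :=
  rsum (fun m => b m * phi m t) M.

Section Orthogonal_system.
Variable phi : nat -> R -> R.
Hypothesis Hphi : orth_system phi.

Let Hcont : forall j, Rcontinuous (phi j) := proj1 Hphi.

Lemma Rcontinuous_trig_poly b M : Rcontinuous (trig_poly phi b M).
Proof. apply (Rcontinuous_rsum (fun m t => b m * phi m t)). intros; Rcontinuous_tac; auto. Qed.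

Lemma int0_mult_trig_poly x h b M : Rcontinuous h ->
  int0 x (fun t => h t * trig_poly phi b M t) =
  rsum (fun m => b m * int0 x (fun t => h t * phi m t)) M.
Proof.
  intros Hh. unfold trig_poly.
  rewrite (int0_ext _ _ (fun t => rsum (fun k => b k * (h t * phi k t)) M)).
  - rewrite (int0_rsum x (fun k t => b k * (h t * phi k t))).
    + apply rsum_ext; intros. apply int0_scal. Rcontinuous_tac; auto.
    + intros k; Rcontinuous_tac; auto.
  - intros t. rewrite <- rsum_scal. apply rsum_ext; intros; ring.
Qed.

Lemma int0_PI_trig_poly_sq b M :
  int0 PI (fun t => trig_poly phi b M t ^ 2) = PI / 2 * rsum (fun m => b m ^ 2) M.
Proof.
  pose proof Hphi as [_ [Horth Hnorm]].
  induction M.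
  - rewrite (int0_ext _ _ (fun _ => 0)) by (intros; unfold trig_poly; simpl; ring).
    rewrite int0_const; simpl; ring.
  - assert (Hcross : int0 PI (fun t => trig_poly phi b M t * phi M t) = 0).
    { rewrite (int0_ext _ _ (fun t => phi M t * trig_poly phi b M t)) by (intros; ring).
      rewrite int0_mult_trig_poly by auto. rewrite <- (rsum_zero M).
      apply rsum_ext. intros k Hk. rewrite (int0_ext _ _ (fun t => phi k t * phi M t)) by (intros; ring).
      rewrite Horth by lia. ring. }
    pose proof (Rcontinuous_trig_poly b M). pose proof (Hcont M).
    rewrite (int0_ext _ _ (fun t => trig_poly phi b M t ^ 2 + (2 * b M) * (trig_poly phi b M t * phi M t)
                                   + (b M ^ 2) * (phi M t ^ 2)))
      by (intros; unfold trig_poly; simpl; ring).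
    rewrite !int0_plus, !int0_scal, IHM, Hcross, Hnorm; [simpl; ring|..]; Rcontinuous_tac.
Qed.

Lemma int0_trig_poly_sq_le x b M : 0 <= x <= PI ->
  int0 x (fun t => trig_poly phi b M t ^ 2) <= PI / 2 * rsum (fun m => b m ^ 2) M.
Proof.
  intros Hx. rewrite <- int0_PI_trig_poly_sq.
  apply int0_le_upper; try lra; [|intros; apply pow2_ge_0].
  pose proof (Rcontinuous_trig_poly b M); Rcontinuous_tac.
Qed.

(* Expand [0 <= int (h - (2/PI) P)^2], where [P] has the (unnormalized) Fourier
   coefficients of [h] as coefficients. *)
Lemma bessel_int0 x h M : 0 <= x <= PI -> Rcontinuous h ->
  rsum (fun m => int0 x (fun t => h t * phi m t) ^ 2) M <= PI / 2 * int0 x (fun t => h t ^ 2).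
Proof.
  intros Hx Hh.
  set (b := fun m => int0 x (fun t => h t * phi m t)).
  set (P := trig_poly phi b M).
  set (s := rsum (fun m => b m ^ 2) M).
  assert (HP : Rcontinuous P) by apply Rcontinuous_trig_poly.
  assert (Ecross : int0 x (fun t => h t * P t) = s).
  { unfold P; rewrite int0_mult_trig_poly by auto. apply rsum_ext. intros; unfold b; ring. }
  assert (Esynth := int0_trig_poly_sq_le x b M Hx). fold P s in Esynth.
  pose proof PI_RGT_0.
  set (l := 2 / PI).
  assert (Hexp : 0 <= int0 x (fun t => (h t - l * P t) ^ 2)) by (apply int0_sq_ge0; Rcontinuous_tac; lra).
  rewrite (int0_ext _ _ (fun t => h t ^ 2 + (- 2 * l) * (h t * P t) + (l * l) * (P t ^ 2))) in Hexp
    by (intros; ring).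
  rewrite !int0_plus, !int0_scal, Ecross in Hexp; Rcontinuous_tac.
  assert (l * l * int0 x (fun t => P t ^ 2) <= l * l * (PI / 2 * s))
    by (apply Rmult_le_compat_l; [apply Rle_0_sqr|exact Esynth]).
  assert (E : l * l * (PI / 2 * s) = l * s) by (unfold l; field; lra).
  assert (Hls : l * s <= int0 x (fun t => h t ^ 2)) by lra.
  change (s <= PI / 2 * int0 x (fun t => h t ^ 2)).
  replace s with (PI / 2 * (l * s)) by (unfold l; field; lra).
  apply Rmult_le_compat_l; lra.
Qed.

End Orthogonal_system.

(** * Second-order estimates for cos and cosh *)

Lemma mvt_at0 (f f' : R -> R) s : (forall c, is_derive f c (f' c)) ->
  exists c, Rabs c <= Rabs s /\ Rabs (f s - f 0) = Rabs (f' c) * Rabs s.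
Proof.
  intros H. destruct (MVT_abs f f' 0 s) as [c [E Hc]].
  - intros c _. apply is_derive_Reals, H.
  - exists c. split.
    + unfold Rmin, Rmax in Hc. destruct (Rle_dec 0 s); unfold Rabs; repeat destruct Rcase_abs; lra.
    + rewrite E. do 2 f_equal. ring.
Qed.

Lemma pow2_Rabs_mult y : y ^ 2 = Rabs y * Rabs y.
Proof. rewrite <- pow2_abs. ring. Qed.

Lemma Rabs_cos_le1 y : Rabs (cos y) <= 1.
Proof. pose proof (COS_bound y). unfold Rabs; destruct Rcase_abs; lra. Qed.
Lemma Rabs_sin_le1 y : Rabs (sin y) <= 1.
Proof. pose proof (SIN_bound y). unfold Rabs; destruct Rcase_abs; lra. Qed.

Lemma Rabs_sin_le y : Rabs (sin y) <= Rabs y.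
Proof.
  destruct (mvt_at0 sin cos y) as [c [_ E]]; [intros; auto_derive; auto; ring|].
  rewrite sin_0, Rminus_0_r in E. rewrite E.
  pose proof (Rabs_cos_le1 c). pose proof (Rabs_pos y). nra.
Qed.

Lemma Rabs_cos_sub1_le y : Rabs (cos y - 1) <= y ^ 2.
Proof.
  destruct (mvt_at0 cos (fun c => - sin c) y) as [c [Hc E]]; [intros; auto_derive; auto; ring|].
  rewrite cos_0 in E. rewrite E, Rabs_Ropp, pow2_Rabs_mult.
  pose proof (Rabs_sin_le c). pose proof (Rabs_pos y). pose proof (Rabs_pos c). nra.
Qed.

Lemma Rabs_sin_sub_le y L : Rabs y <= L -> Rabs (sin y - y) <= L * y ^ 2.
Proof.
  intros Hy.
  destruct (mvt_at0 (fun y => sin y - y) (fun c => cos c - 1) y) as [c [Hc E]];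
    [intros; auto_derive; auto; ring|].
  rewrite sin_0, Rminus_0_r, Rminus_0_r in E. rewrite E, pow2_Rabs_mult.
  pose proof (Rabs_cos_sub1_le c). rewrite pow2_Rabs_mult in H.
  pose proof (Rabs_pos y). pose proof (Rabs_pos c).
  assert (Rabs c * Rabs c <= L * Rabs y) by nra. nra.
Qed.

Lemma exp_le_mono x y : x <= y -> exp x <= exp y.
Proof. intros [H|H]; [apply Rlt_le, exp_increasing; lra|subst; lra]. Qed.

Lemma exp_Rabs_le c L : Rabs c <= L -> exp c <= exp L /\ exp (- c) <= exp L.
Proof.
  intros H. split; apply exp_le_mono; unfold Rabs in H; destruct Rcase_abs; lra.
Qed.

Lemma Rabs_cosh_le c L : Rabs c <= L -> Rabs (cosh c) <= exp L.
Proof.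
  intros H. destruct (exp_Rabs_le c L H). unfold cosh.
  pose proof (exp_pos c). pose proof (exp_pos (- c)). rewrite Rabs_right; lra.
Qed.
Lemma Rabs_sinh_le c L : Rabs c <= L -> Rabs (sinh c) <= exp L.
Proof.
  intros H. destruct (exp_Rabs_le c L H). unfold sinh.
  pose proof (exp_pos c). pose proof (exp_pos (- c)). unfold Rabs; destruct Rcase_abs; lra.
Qed.

Lemma is_derive_sinh c : is_derive sinh c (cosh c).
Proof. apply is_derive_Reals, derivable_pt_lim_sinh. Qed.
Lemma is_derive_cosh c : is_derive cosh c (sinh c).
Proof. apply is_derive_Reals, derivable_pt_lim_cosh. Qed.

Lemma Rabs_sinh_le_lin y L : Rabs y <= L -> Rabs (sinh y) <= exp L * Rabs y.
Proof.
  intros Hy. destruct (mvt_at0 sinh cosh y) as [c [Hc E]]; [apply is_derive_sinh|].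
  rewrite sinh_0, Rminus_0_r in E. rewrite E.
  pose proof (Rabs_cosh_le c L ltac:(lra)). pose proof (Rabs_pos y). nra.
Qed.

Lemma Rabs_cosh_sub1_le y L : Rabs y <= L -> Rabs (cosh y - 1) <= exp L * y ^ 2.
Proof.
  intros Hy. destruct (mvt_at0 cosh sinh y) as [c [Hc E]]; [apply is_derive_cosh|].
  rewrite cosh_0 in E. rewrite E, pow2_Rabs_mult.
  pose proof (Rabs_sinh_le_lin c L ltac:(lra)). pose proof (Rabs_pos y). pose proof (Rabs_pos c).
  pose proof (exp_pos L).
  assert (Rabs (sinh c) <= exp L * Rabs y) by nra. nra.
Qed.

Lemma Rabs_sinh_sub_le y L : Rabs y <= L -> Rabs (sinh y - y) <= L * exp L * y ^ 2.
Proof.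
  intros Hy.
  destruct (mvt_at0 (fun y => sinh y - y) (fun c => cosh c - 1) y) as [c [Hc E]].
  { intros c. apply (is_derive_minus sinh (fun y => y)); [apply is_derive_sinh|].
    apply (is_derive_id (K:=R_AbsRing)). }
  rewrite sinh_0, !Rminus_0_r in E. rewrite E, pow2_Rabs_mult.
  pose proof (Rabs_cosh_sub1_le c L ltac:(lra)). rewrite pow2_Rabs_mult in H.
  pose proof (Rabs_pos y). pose proof (Rabs_pos c). pose proof (exp_pos L).
  assert (Rabs c * Rabs c <= L * Rabs y) by nra.
  assert (Rabs (cosh c - 1) <= exp L * (L * Rabs y)).
  { eapply Rle_trans; [apply H|]. apply Rmult_le_compat_l; lra. }
  nra.
Qed.

Lemma Rabs_mult_le u v A B : Rabs u <= A -> Rabs v <= B -> Rabs (u * v) <= A * B.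
Proof. intros. rewrite Rabs_mult. apply Rmult_le_compat; auto using Rabs_pos. Qed.

Definition taylor_const (L : R) : R := (1 + L) * (1 + 2 * exp L).

Lemma taylor_const_pos L : 0 <= L -> 0 < taylor_const L.
Proof. intros. unfold taylor_const. pose proof (exp_pos L). nra. Qed.

(* The real and imaginary parts of [cos (m + al + i be)], expanded to first order
   in [(al, be)] around the real point [m]. *)
Lemma cos_cosh_taylor m al be L : Rabs al <= L -> Rabs be <= L ->
  Rabs (cos (m + al) * cosh be - cos m + al * sin m) <= taylor_const L * (al ^ 2 + be ^ 2).
Proof.
  intros Ha Hb. assert (HL : 0 <= L) by (pose proof (Rabs_pos al); lra).
  pose proof (Rabs_cos_sub1_le al) as B1. pose proof (Rabs_sin_sub_le al L Ha) as B2.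
  pose proof (Rabs_sin_le al) as B3. pose proof (Rabs_cosh_le be L Hb) as B4.
  pose proof (Rabs_cosh_sub1_le be L Hb) as B5.
  pose proof (exp_pos L) as HE. set (E := exp L) in *.
  pose proof (Rabs_cos_le1 m). pose proof (Rabs_sin_le1 m).
  pose proof (pow2_ge_0 al). pose proof (pow2_ge_0 be).
  set (X := cos al * cosh be - 1). set (Y := sin al * cosh be - al).
  replace (cos (m + al) * cosh be - cos m + al * sin m) with (cos m * X - sin m * Y)
    by (unfold X, Y; rewrite cos_plus; ring).
  assert (HX : Rabs X <= E * al ^ 2 + E * be ^ 2).
  { unfold X. replace (cos al * cosh be - 1) with ((cos al - 1) * cosh be + (cosh be - 1)) by ring.
    eapply Rle_trans; [apply Rabs_triang|]. pose proof (Rabs_mult_le _ _ _ _ B1 B4). nra. }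
  assert (HY : Rabs Y <= L * al ^ 2 + L * E * be ^ 2).
  { unfold Y. replace (sin al * cosh be - al) with ((sin al - al) + sin al * (cosh be - 1)) by ring.
    eapply Rle_trans; [apply Rabs_triang|].
    assert (Rabs (sin al) <= L) by lra.
    pose proof (Rabs_mult_le _ _ _ _ H3 B5). nra. }
  unfold Rminus. eapply Rle_trans; [apply Rabs_triang|]. rewrite Rabs_Ropp.
  pose proof (Rabs_mult_le _ _ _ _ H HX). pose proof (Rabs_mult_le _ _ _ _ H0 HY).
  unfold taylor_const; fold E.
  assert (0 <= L * E) by (apply Rmult_le_pos; lra). nra.
Qed.

Lemma sin_sinh_taylor m al be L : Rabs al <= L -> Rabs be <= L ->
  Rabs (- (sin (m + al) * sinh be) + be * sin m) <= taylor_const L * (al ^ 2 + be ^ 2).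
Proof.
  intros Ha Hb. assert (HL : 0 <= L) by (pose proof (Rabs_pos al); lra).
  pose proof (Rabs_cos_sub1_le al) as B1. pose proof (Rabs_sin_le al) as B3.
  pose proof (Rabs_sinh_le be L Hb) as B4. pose proof (Rabs_sinh_sub_le be L Hb) as B6.
  pose proof (Rabs_sinh_le_lin be L Hb) as B7.
  pose proof (exp_pos L) as HE. set (E := exp L) in *.
  pose proof (Rabs_cos_le1 m). pose proof (Rabs_sin_le1 m).
  pose proof (pow2_ge_0 al). pose proof (pow2_ge_0 be).
  assert (Hab : Rabs al * Rabs be <= al ^ 2 + be ^ 2).
  { rewrite !pow2_Rabs_mult. pose proof (Rabs_pos al). pose proof (Rabs_pos be). nra. }
  set (Z := cos al * sinh be - be). set (W := sin al * sinh be).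
  replace (- (sin (m + al) * sinh be) + be * sin m) with (- (sin m * Z) - cos m * W)
    by (unfold Z, W; rewrite sin_plus; ring).
  assert (HZ : Rabs Z <= E * al ^ 2 + L * E * be ^ 2).
  { unfold Z. replace (cos al * sinh be - be) with ((cos al - 1) * sinh be + (sinh be - be)) by ring.
    eapply Rle_trans; [apply Rabs_triang|]. pose proof (Rabs_mult_le _ _ _ _ B1 B4). nra. }
  assert (HW : Rabs W <= E * (al ^ 2 + be ^ 2)).
  { unfold W. rewrite Rabs_mult. pose proof (Rabs_pos (sin al)). pose proof (Rabs_pos be).
    assert (Rabs (sin al) * Rabs (sinh be) <= Rabs al * (E * Rabs be))
      by (apply Rmult_le_compat; auto using Rabs_pos).
    nra. }
  unfold Rminus. eapply Rle_trans; [apply Rabs_triang|]. rewrite !Rabs_Ropp.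
  pose proof (Rabs_mult_le _ _ _ _ H0 HZ). pose proof (Rabs_mult_le _ _ _ _ H HW).
  unfold taylor_const; fold E.
  assert (0 <= L * E) by (apply Rmult_le_pos; lra). nra.
Qed.

Lemma Cmod_le_Rabs_fst_snd z : Cmod z <= Rabs (fst z) + Rabs (snd z).
Proof.
  pose proof (Cmod2_alt z). pose proof (Cmod_ge_0 z).
  pose proof (Rabs_pos (fst z)). pose proof (Rabs_pos (snd z)).
  unfold Re, Im in H. rewrite <- (pow2_abs (fst z)), <- (pow2_abs (snd z)) in H. nra.
Qed.
Lemma Rabs_snd_le_Cmod z : Rabs (snd z) <= Cmod z.
Proof. pose proof (Rmax_Cmod z). pose proof (Rmax_r (Rabs (fst z)) (Rabs (snd z))). lra. Qed.

Definition ccos (z : C) (t : R) : C := Ccos (Cmult z (RtoC t)).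

Lemma ccos_eq z t :
  ccos z t = (cos (fst z * t) * cosh (snd z * t), - (sin (fst z * t) * sinh (snd z * t))).
Proof.
  destruct z as [a b]. unfold ccos, Ccos, Cmult, RtoC; simpl.
  replace (a * t - b * 0) with (a * t) by ring. replace (a * 0 + b * t) with (b * t) by ring.
  reflexivity.
Qed.

Lemma ccos_real m t : ccos (RtoC m) t = RtoC (cos (m * t)).
Proof.
  rewrite ccos_eq. unfold RtoC; simpl. rewrite Rmult_0_l, cosh_0, sinh_0. f_equal; ring.
Qed.

Lemma ccos_opp r t : ccos (Copp r) t = ccos r t.
Proof.
  rewrite !ccos_eq. destruct r as [a b]; simpl.
  replace (- a * t) with (- (a * t)) by ring. replace (- b * t) with (- (b * t)) by ring.
  rewrite cos_neg, sin_neg. unfold cosh, sinh. rewrite Ropp_involutive. f_equal; field.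
Qed.

Definition ccos_bound (Om : R) : R := 2 * exp (PI * Om).

Lemma Cmod_ccos_le z t Om : 0 <= t <= PI -> Rabs (snd z) <= Om -> Cmod (ccos z t) <= ccos_bound Om.
Proof.
  intros Ht Hz. unfold ccos_bound. eapply Rle_trans; [apply Cmod_le_Rabs_fst_snd|]. rewrite ccos_eq; simpl.
  assert (H : Rabs (snd z * t) <= PI * Om).
  { rewrite Rabs_mult, (Rabs_right t) by lra. pose proof (Rabs_pos (snd z)). pose proof PI_RGT_0. nra. }
  pose proof (Rabs_mult_le _ _ _ _ (Rabs_cos_le1 (fst z * t)) (Rabs_cosh_le _ _ H)).
  pose proof (Rabs_mult_le _ _ _ _ (Rabs_sin_le1 (fst z * t)) (Rabs_sinh_le _ _ H)).
  rewrite Rabs_Ropp. lra.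
Qed.

Definition taylor2_const (Om : R) : R := 2 * taylor_const (PI * Om) * PI ^ 2.
Definition taylor1_const (Om : R) : R := taylor2_const Om * Om + PI.

Lemma taylor2_const_ge0 Om : 0 <= Om -> 0 <= taylor2_const Om.
Proof.
  intros. unfold taylor2_const. pose proof PI_RGT_0. assert (0 <= PI * Om) by nra.
  pose proof (taylor_const_pos _ H1). pose proof (pow2_ge_0 PI). nra.
Qed.
Lemma taylor1_const_ge0 Om : 0 <= Om -> 0 <= taylor1_const Om.
Proof.
  intros. unfold taylor1_const. pose proof (taylor2_const_ge0 Om H). pose proof PI_RGT_0. nra.
Qed.

Lemma ccos_taylor2 (m : R) (k : C) (t Om : R) : 0 <= t <= PI -> Cmod k <= Om ->
  Cmod (Cplus (Cminus (ccos (Cplus (RtoC m) k) t) (RtoC (cos (m * t))))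
              (Cmult k (RtoC (t * sin (m * t)))))
    <= taylor2_const Om * Cmod k ^ 2.
Proof.
  intros Ht Hk. pose proof PI_RGT_0. destruct k as [a b].
  assert (Ha : Rabs (a * t) <= PI * Om).
  { rewrite Rabs_mult, (Rabs_right t) by lra. pose proof (re_le_Cmod (a, b)). simpl in H0.
    pose proof (Rabs_pos a). nra. }
  assert (Hb : Rabs (b * t) <= PI * Om).
  { rewrite Rabs_mult, (Rabs_right t) by lra. pose proof (Rabs_snd_le_Cmod (a, b)). simpl in H0.
    pose proof (Rabs_pos b). nra. }
  pose proof (cos_cosh_taylor (m * t) (a * t) (b * t) (PI * Om) Ha Hb) as T1.
  pose proof (sin_sinh_taylor (m * t) (a * t) (b * t) (PI * Om) Ha Hb) as T2.
  eapply Rle_trans; [apply Cmod_le_Rabs_fst_snd|].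
  rewrite ccos_eq. unfold Cplus, Cminus, Cmult, RtoC, Copp; simpl.
  replace ((m + a) * t) with (m * t + a * t) by ring. replace ((0 + b) * t) with (b * t) by ring.
  replace (cos (m * t + a * t) * cosh (b * t) + - cos (m * t) + (a * (t * sin (m * t)) - b * 0))
    with (cos (m * t + a * t) * cosh (b * t) - cos (m * t) + a * t * sin (m * t)) by ring.
  replace (- (sin (m * t + a * t) * sinh (b * t)) + - 0 + (a * 0 + b * (t * sin (m * t))))
    with (- (sin (m * t + a * t) * sinh (b * t)) + b * t * sin (m * t)) by ring.
  assert (Eab : (a * t) ^ 2 + (b * t) ^ 2 = t ^ 2 * Cmod (a, b) ^ 2).
  { rewrite Cmod2_alt. unfold Re, Im; simpl. ring. }
  rewrite Eab in T1, T2.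
  assert (Ht2 : t ^ 2 <= PI ^ 2) by nra.
  assert (0 <= PI * Om) by (pose proof (Cmod_ge_0 (a, b)); nra).
  pose proof (taylor_const_pos _ H0). pose proof (pow2_ge_0 (Cmod (a, b))).
  assert (taylor_const (PI * Om) * (t ^ 2 * Cmod (a, b) ^ 2)
          <= taylor_const (PI * Om) * (PI ^ 2 * Cmod (a, b) ^ 2)).
  { apply Rmult_le_compat_l; [lra|]. apply Rmult_le_compat_r; lra. }
  unfold taylor2_const. lra.
Qed.

Lemma ccos_taylor1 (m : R) (k : C) (t Om : R) : 0 <= t <= PI -> Cmod k <= Om ->
  Cmod (Cminus (ccos (Cplus (RtoC m) k) t) (RtoC (cos (m * t)))) <= taylor1_const Om * Cmod k.
Proof.
  intros Ht Hk.
  set (r := Cplus (Cminus (ccos (Cplus (RtoC m) k) t) (RtoC (cos (m * t))))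
                  (Cmult k (RtoC (t * sin (m * t))))).
  replace (Cminus (ccos (Cplus (RtoC m) k) t) (RtoC (cos (m * t))))
    with (Cminus r (Cmult k (RtoC (t * sin (m * t))))) by (unfold r; field).
  unfold Cminus. eapply Rle_trans; [apply Cmod_triangle|]. rewrite Cmod_opp, Cmod_mult, Cmod_R.
  pose proof (ccos_taylor2 m k t Om Ht Hk). fold r in H.
  assert (Rabs (t * sin (m * t)) <= PI).
  { rewrite Rabs_mult, (Rabs_right t) by lra. pose proof (Rabs_sin_le1 (m * t)).
    pose proof (Rabs_pos (sin (m * t))). nra. }
  pose proof (Cmod_ge_0 k). pose proof (taylor2_const_ge0 Om ltac:(lra)).
  assert (Cmod k ^ 2 <= Om * Cmod k) by nra.
  assert (taylor2_const Om * Cmod k ^ 2 <= taylor2_const Om * (Om * Cmod k))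
    by (apply Rmult_le_compat_l; lra).
  unfold taylor1_const. nra.
Qed.

Definition Ccontinuous (G : R -> C) : Prop :=
  Rcontinuous (fun t => fst (G t)) /\ Rcontinuous (fun t => snd (G t)).

Lemma Ccontinuous_plus F G : Ccontinuous F -> Ccontinuous G -> Ccontinuous (fun t => Cplus (F t) (G t)).
Proof. intros [] []; split; simpl; Rcontinuous_tac. Qed.
Lemma Ccontinuous_minus F G : Ccontinuous F -> Ccontinuous G -> Ccontinuous (fun t => Cminus (F t) (G t)).
Proof. intros [] []; split; simpl; Rcontinuous_tac. Qed.
Lemma Ccontinuous_mult F G : Ccontinuous F -> Ccontinuous G -> Ccontinuous (fun t => Cmult (F t) (G t)).
Proof. intros [] []; split; simpl; Rcontinuous_tac. Qed.
Lemma Ccontinuous_const c : Ccontinuous (fun _ => c).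
Proof. split; apply Rcontinuous_const. Qed.
Lemma Ccontinuous_RtoC f : Rcontinuous f -> Ccontinuous (fun t => RtoC (f t)).
Proof. intros; split; simpl; Rcontinuous_tac. Qed.
Lemma Ccontinuous_ccos z : Ccontinuous (ccos z).
Proof.
  split; [apply (Rcontinuous_ext (fun t => cos (fst z * t) * cosh (snd z * t)))
         |apply (Rcontinuous_ext (fun t => - (sin (fst z * t) * sinh (snd z * t))))];
  try (intros; rewrite ccos_eq; reflexivity); Rcontinuous_tac.
Qed.

Ltac Ccontinuous_tac :=
  repeat match goal with
  | |- Ccontinuous (fun _ => ?c) => apply (Ccontinuous_const c)
  | |- Ccontinuous (fun t => Cplus (@?F t) (@?G t)) => apply (Ccontinuous_plus F G)
  | |- Ccontinuous (fun t => Cminus (@?F t) (@?G t)) => apply (Ccontinuous_minus F G)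
  | |- Ccontinuous (fun t => Cmult (@?F t) (@?G t)) => apply (Ccontinuous_mult F G)
  | |- Ccontinuous (fun t => RtoC (@?f t)) => apply (Ccontinuous_RtoC f); Rcontinuous_tac
  | |- Ccontinuous (fun t => ccos ?z t) => apply (Ccontinuous_ccos z)
  | |- Ccontinuous (ccos ?z) => apply (Ccontinuous_ccos z)
  | H : Ccontinuous ?G |- Ccontinuous ?G => exact H
  end.

Definition cint0 (x : R) (G : R -> C) : C := @RInt C_R_CompleteNormedModule G 0 x.

Section Cint0.
Variable x : R.

Lemma cint0_components G : Ccontinuous G ->
  cint0 x G = (int0 x (fun t => fst (G t)), int0 x (fun t => snd (G t))).
Proof.
  intros [H1 H2]. apply (is_RInt_unique (V:=C_R_CompleteNormedModule)).
  apply (is_RInt_fct_extend_pair (U:=R_NormedModule) (V:=R_NormedModule));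
    apply (RInt_correct (V:=R_CompleteNormedModule)); apply ex_RInt_Rcontinuous; auto.
Qed.

Lemma cint0_ext F G : (forall t, F t = G t) -> cint0 x F = cint0 x G.
Proof. intros H. apply (RInt_ext (V:=C_R_CompleteNormedModule)). intros; auto. Qed.

Lemma cint0_plus F G : Ccontinuous F -> Ccontinuous G ->
  cint0 x (fun t => Cplus (F t) (G t)) = Cplus (cint0 x F) (cint0 x G).
Proof.
  intros HF HG. rewrite !cint0_components by (auto; Ccontinuous_tac). destruct HF, HG.
  unfold Cplus; simpl. rewrite !int0_plus; auto.
Qed.
Lemma cint0_minus F G : Ccontinuous F -> Ccontinuous G ->
  cint0 x (fun t => Cminus (F t) (G t)) = Cminus (cint0 x F) (cint0 x G).
Proof.
  intros HF HG. rewrite !cint0_components by (auto; Ccontinuous_tac). destruct HF, HG.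
  unfold Cminus, Cplus, Copp; simpl. rewrite !int0_plus, !int0_opp; auto; Rcontinuous_tac.
Qed.
Lemma cint0_scal c G : Ccontinuous G -> cint0 x (fun t => Cmult c (G t)) = Cmult c (cint0 x G).
Proof.
  intros HG. rewrite !cint0_components by (auto; Ccontinuous_tac). destruct HG.
  unfold Cmult; simpl.
  rewrite (int0_ext _ _ (fun t => fst c * fst (G t) + (- snd c) * snd (G t))) by (intros; ring).
  rewrite !int0_plus, !int0_scal; Rcontinuous_tac. f_equal; ring.
Qed.

End Cint0.

Fixpoint csum (f : nat -> C) (n : nat) : C :=
  match n with O => RtoC 0 | S n => Cplus (csum f n) (f n) end.

Lemma csum_ext f g n : (forall k, (k < n)%nat -> f k = g k) -> csum f n = csum g n.
Proof. induction n; simpl; intros; auto. rewrite IHn, H; auto. Qed.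
Lemma csum_fst f n : fst (csum f n) = rsum (fun k => fst (f k)) n.
Proof. induction n; simpl; auto. rewrite IHn; auto. Qed.
Lemma csum_snd f n : snd (csum f n) = rsum (fun k => snd (f k)) n.
Proof. induction n; simpl; auto. rewrite IHn; auto. Qed.
Lemma csum_plus f g n : csum (fun k => Cplus (f k) (g k)) n = Cplus (csum f n) (csum g n).
Proof. induction n; simpl; [apply injective_projections; simpl; ring|rewrite IHn; field]. Qed.
Lemma csum_scal c g n : Cmult c (csum g n) = csum (fun k => Cmult c (g k)) n.
Proof. induction n; simpl; [apply injective_projections; simpl; ring|rewrite <- IHn; field]. Qed.
Lemma csum_split f a b : csum f (a + b) = Cplus (csum f a) (csum (fun k => f (a + k)%nat) b).
Proof.
  induction b; simpl; [rewrite Nat.add_0_r; apply injective_projections; simpl; ring|].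
  rewrite Nat.add_succ_r; simpl; rewrite IHb. field.
Qed.
Lemma csum_sum_n (a : nat -> C) m : csum a (S m) = @sum_n C_AbelianMonoid a m.
Proof.
  induction m; simpl; [rewrite sum_O; apply injective_projections; simpl; ring|].
  rewrite sum_Sn, <- IHm. reflexivity.
Qed.
Lemma Cmod_csum_le f n : Cmod (csum f n) <= rsum (fun k => Cmod (f k)) n.
Proof.
  induction n; simpl; [rewrite Cmod_0; lra|].
  eapply Rle_trans; [apply Cmod_triangle|lra].
Qed.

Lemma Ccontinuous_csum (F : nat -> R -> C) n : (forall k, Ccontinuous (F k)) ->
  Ccontinuous (fun t => csum (fun k => F k t) n).
Proof. intros H; induction n; simpl; Ccontinuous_tac; auto. Qed.

Lemma cint0_csum x (F : nat -> R -> C) n : (forall k, Ccontinuous (F k)) ->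
  cint0 x (fun t => csum (fun k => F k t) n) = csum (fun k => cint0 x (F k)) n.
Proof.
  intros H; induction n; simpl.
  - rewrite cint0_components by Ccontinuous_tac. simpl. rewrite int0_const, Rmult_0_r. reflexivity.
  - rewrite cint0_plus, IHn; auto. apply Ccontinuous_csum; auto.
Qed.

Definition l2sq (x : R) (G : R -> C) : R :=
  int0 x (fun t => fst (G t) ^ 2) + int0 x (fun t => snd (G t) ^ 2).

Section L2.
Variable x : R.
Hypothesis Hx : 0 <= x.

Lemma l2sq_ext F G : (forall t, F t = G t) -> l2sq x F = l2sq x G.
Proof. intros H; unfold l2sq. f_equal; apply int0_ext; intros; rewrite H; auto. Qed.

Lemma l2sq_ge0 G : Ccontinuous G -> 0 <= l2sq x G.
Proof.
  intros [H1 H2]. unfold l2sq.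
  pose proof (int0_sq_ge0 x Hx _ H1). pose proof (int0_sq_ge0 x Hx _ H2). lra.
Qed.

Lemma l2sq_le_sup G M : Ccontinuous G -> (forall t, 0 <= t <= x -> Cmod (G t) <= M) ->
  l2sq x G <= x * M ^ 2.
Proof.
  intros [H1 H2] HM. unfold l2sq. rewrite <- int0_plus, <- int0_const by Rcontinuous_tac.
  apply int0_le; auto; Rcontinuous_tac. intros t Ht. specialize (HM t Ht).
  pose proof (Cmod2_alt (G t)). unfold Re, Im in H. pose proof (Cmod_ge_0 (G t)).
  rewrite <- H. apply pow_incr. lra.
Qed.

Lemma l2sq_plus_le F G : Ccontinuous F -> Ccontinuous G ->
  l2sq x (fun t => Cplus (F t) (G t)) <= 2 * l2sq x F + 2 * l2sq x G.
Proof.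
  intros [F1 F2] [G1 G2]. unfold l2sq, Cplus; cbn [fst snd].
  replace (2 * (int0 x (fun t => fst (F t) ^ 2) + int0 x (fun t => snd (F t) ^ 2)) +
           2 * (int0 x (fun t => fst (G t) ^ 2) + int0 x (fun t => snd (G t) ^ 2)))
    with (int0 x (fun t => 2 * fst (F t) ^ 2 + 2 * fst (G t) ^ 2) +
          int0 x (fun t => 2 * snd (F t) ^ 2 + 2 * snd (G t) ^ 2))
    by (rewrite !int0_plus, !int0_scal; Rcontinuous_tac; ring).
  apply Rplus_le_compat; apply int0_le; auto; Rcontinuous_tac;
    intros t _; match goal with |- (?a + ?b) ^ 2 <= _ => pose proof (pow2_ge_0 (a - b)); nra end.
Qed.

Lemma l2sq_plus3_le F1 F2 F3 : Ccontinuous F1 -> Ccontinuous F2 -> Ccontinuous F3 ->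
  l2sq x (fun t => Cplus (Cplus (F1 t) (F2 t)) (F3 t))
    <= 3 * l2sq x F1 + 3 * l2sq x F2 + 3 * l2sq x F3.
Proof.
  intros [F11 F12] [F21 F22] [F31 F32].
  assert (Hsq : forall a b c, (a + b + c) ^ 2 <= 3 * a ^ 2 + 3 * b ^ 2 + 3 * c ^ 2).
  { intros. pose proof (pow2_ge_0 (a - b)). pose proof (pow2_ge_0 (a - c)).
    pose proof (pow2_ge_0 (b - c)). nra. }
  unfold l2sq, Cplus; cbn [fst snd].
  assert (Hcomp : forall f1 f2 f3 : R -> R, Rcontinuous f1 -> Rcontinuous f2 -> Rcontinuous f3 ->
    int0 x (fun t => (f1 t + f2 t + f3 t) ^ 2)
      <= 3 * int0 x (fun t => f1 t ^ 2) + 3 * int0 x (fun t => f2 t ^ 2) + 3 * int0 x (fun t => f3 t ^ 2)).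
  { intros. rewrite <- !int0_scal, <- !int0_plus by Rcontinuous_tac.
    apply int0_le; auto; Rcontinuous_tac. }
  pose proof (Hcomp _ _ _ F11 F21 F31). pose proof (Hcomp _ _ _ F12 F22 F32). lra.
Qed.

(* The imaginary part of [u g] is [u1 g2 + u2 g1]; each of the four real products is
   bounded by the real Cauchy-Schwarz inequality. *)
Lemma Cmod_cint0_mult_sq_le U G : Ccontinuous U -> Ccontinuous G ->
  Cmod (cint0 x (fun t => Cmult (U t) (G t))) ^ 2 <= 2 * l2sq x U * l2sq x G.
Proof.
  intros HU HG. rewrite cint0_components by Ccontinuous_tac.
  destruct HU as [U1 U2], HG as [G1 G2].
  rewrite Cmod2_alt. unfold Re, Im; simpl.
  rewrite !int0_minus, !int0_plus by Rcontinuous_tac.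
  pose proof (int0_cauchy_schwarz x Hx _ _ U1 G1). pose proof (int0_cauchy_schwarz x Hx _ _ U2 G2).
  pose proof (int0_cauchy_schwarz x Hx _ _ U1 G2). pose proof (int0_cauchy_schwarz x Hx _ _ U2 G1).
  unfold l2sq.
  set (a := int0 x (fun t => fst (U t) * fst (G t))) in *.
  set (b := int0 x (fun t => snd (U t) * snd (G t))) in *.
  set (c := int0 x (fun t => fst (U t) * snd (G t))) in *.
  set (d := int0 x (fun t => snd (U t) * fst (G t))) in *.
  assert ((a - b) ^ 2 <= 2 * a ^ 2 + 2 * b ^ 2) by (pose proof (pow2_ge_0 (a + b)); nra).
  assert ((c + d) ^ 2 <= 2 * c ^ 2 + 2 * d ^ 2) by (pose proof (pow2_ge_0 (c - d)); nra).
  replace (d + c) with (c + d) by ring.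
  nra.
Qed.

Lemma l2sq_t_mult_le G : x <= PI -> Ccontinuous G ->
  l2sq x (fun t => Cmult (RtoC t) (G t)) <= PI ^ 2 * l2sq x G.
Proof.
  intros HxPI [G1 G2]. unfold l2sq, Cmult, RtoC; cbn [fst snd].
  rewrite Rmult_plus_distr_l, <- !int0_scal by Rcontinuous_tac.
  assert (Ht2 : forall t b, 0 <= t <= x -> (t * b) ^ 2 <= PI ^ 2 * b ^ 2).
  { intros t b Ht. rewrite Rpow_mult_distr.
    apply Rmult_le_compat_r; [apply pow2_ge_0|apply pow_incr; lra]. }
  apply Rplus_le_compat; apply int0_le; auto; Rcontinuous_tac; intros t Ht;
    match goal with |- ?a ^ 2 <= PI ^ 2 * ?b ^ 2 => replace a with (t * b) by ring end;
    apply Ht2; auto.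
Qed.

End L2.

Definition ctrig_poly (phi : nat -> R -> R) (A : nat -> C) (L : nat) (t : R) : C :=
  csum (fun j => Cmult (A j) (RtoC (phi j t))) L.

Lemma l2sq_ctrig_poly_le phi A L x : orth_system phi -> 0 <= x <= PI ->
  l2sq x (ctrig_poly phi A L) <= PI / 2 * rsum (fun j => Cmod (A j) ^ 2) L.
Proof.
  intros Hphi Hx. unfold l2sq.
  rewrite (int0_ext _ _ (fun t => trig_poly phi (fun j => fst (A j)) L t ^ 2)).
  rewrite (int0_ext _ (fun t => snd _ ^ 2) (fun t => trig_poly phi (fun j => snd (A j)) L t ^ 2)).
  - pose proof (int0_trig_poly_sq_le phi Hphi x (fun j => fst (A j)) L Hx).
    pose proof (int0_trig_poly_sq_le phi Hphi x (fun j => snd (A j)) L Hx).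
    replace (rsum (fun j => Cmod (A j) ^ 2) L)
      with (rsum (fun j => fst (A j) ^ 2) L + rsum (fun j => snd (A j) ^ 2) L).
    + lra.
    + rewrite <- rsum_plus. apply rsum_ext. intros. rewrite Cmod2_alt. reflexivity.
  - intros t. unfold ctrig_poly, trig_poly. rewrite csum_snd. do 2 f_equal.
    apply functional_extensionality; intros j. unfold Cmult, RtoC; simpl. ring.
  - intros t. unfold ctrig_poly, trig_poly. rewrite csum_fst. do 2 f_equal.
    apply functional_extensionality; intros j. unfold Cmult, RtoC; simpl. ring.
Qed.

Lemma Ccontinuous_ctrig_poly phi A L : orth_system phi -> Ccontinuous (ctrig_poly phi A L).
Proof.
  intros [Hc _]. apply (Ccontinuous_csum (fun j t => Cmult (A j) (RtoC (phi j t)))).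
  intros j. pose proof (Hc j). Ccontinuous_tac.
Qed.

(* The shape of a column sum near the model data: a cosine polynomial, [t] times a
   sine polynomial, and a uniformly small remainder. *)
Lemma l2sq_decomp_le x (phi1 phi2 : nat -> R -> R) (A B : nat -> C) (Rj : nat -> R -> C)
    (eps : nat -> R) L :
  0 <= x <= PI -> orth_system phi1 -> orth_system phi2 -> (forall j, Ccontinuous (Rj j)) ->
  (forall j t, 0 <= t <= x -> Cmod (Rj j t) <= eps j) ->
  l2sq x (fun t => csum (fun j => Cplus (Cplus (Cmult (A j) (RtoC (phi1 j t)))
                                              (Cmult (B j) (RtoC (t * phi2 j t))))
                                        (Rj j t)) L)
   <= 3 * (PI / 2 * rsum (fun j => Cmod (A j) ^ 2) L +
           PI ^ 3 / 2 * rsum (fun j => Cmod (B j) ^ 2) L + PI * rsum eps L ^ 2).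
Proof.
  intros Hx H1 H2 HR Heps. pose proof PI_RGT_0.
  set (Rsum := fun t => csum (fun j => Rj j t) L).
  assert (HRsum : Ccontinuous Rsum) by (apply Ccontinuous_csum; auto).
  pose proof (Ccontinuous_ctrig_poly phi1 A L H1) as HA.
  pose proof (Ccontinuous_ctrig_poly phi2 B L H2) as HB.
  rewrite (l2sq_ext x _ (fun t => Cplus (Cplus (ctrig_poly phi1 A L t)
                                               (Cmult (RtoC t) (ctrig_poly phi2 B L t))) (Rsum t))).
  2: { intros t. unfold ctrig_poly, Rsum. rewrite csum_scal, <- !csum_plus.
       apply csum_ext; intros j _. rewrite RtoC_mult. field. }
  eapply Rle_trans; [apply l2sq_plus3_le; try lra; Ccontinuous_tac|].
  pose proof (l2sq_ctrig_poly_le phi1 A L x H1 Hx).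
  pose proof (l2sq_ctrig_poly_le phi2 B L x H2 Hx).
  pose proof (l2sq_t_mult_le x ltac:(lra) _ ltac:(lra) HB).
  assert (l2sq x Rsum <= PI * rsum eps L ^ 2).
  { eapply Rle_trans; [apply l2sq_le_sup; try lra; auto|].
    - intros t Ht. eapply Rle_trans; [apply Cmod_csum_le|]. apply rsum_le. intros; auto.
    - apply Rmult_le_compat_r; [apply pow2_ge_0|lra]. }
  assert (PI ^ 2 * l2sq x (ctrig_poly phi2 B L) <= PI ^ 3 / 2 * rsum (fun j => Cmod (B j) ^ 2) L).
  { replace (PI ^ 3 / 2) with (PI ^ 2 * (PI / 2)) by field.
    rewrite Rmult_assoc. apply Rmult_le_compat_l; [nra|auto]. }
  lra.
Qed.

Lemma sum_n_le_Series (X : nat -> R) m : ex_series X -> (forall k, 0 <= X k) -> sum_n X m <= Series X.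
Proof.
  intros HX Hp.
  apply (is_lim_seq_le_loc (fun _ => sum_n X m) (sum_n X) (sum_n X m) (Series X)).
  - exists m. intros n Hn. replace n with (m + (n - m))%nat by lia.
    rewrite <- !rsum_sum_n. replace (S (m + (n - m))) with (S m + (n - m))%nat by lia.
    rewrite rsum_split. assert (0 <= rsum (fun k => X (S m + k)%nat) (n - m)) by (apply rsum_ge0; auto).
    lra.
  - apply is_lim_seq_const.
  - apply (Series_correct X HX).
Qed.

Lemma rsum_window_le_Series (X : nat -> R) n L : ex_series X -> (forall k, 0 <= X k) ->
  rsum (fun j => X (n + j)%nat) L <= Series X.
Proof.
  intros HX Hp. eapply Rle_trans; [|apply (sum_n_le_Series X (n + L) HX Hp)].
  rewrite <- rsum_sum_n. replace (S (n + L)) with (n + S L)%nat by lia. rewrite rsum_split. simpl.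
  assert (0 <= rsum X n) by (apply rsum_ge0; auto). pose proof (Hp (n + L)%nat). lra.
Qed.

Lemma sum_n_m_csum (a : nat -> C) m1 m2 : (m1 <= m2)%nat ->
  @sum_n_m C_AbelianMonoid a m1 m2 = csum (fun j => a (m1 + j)%nat) (S (m2 - m1)).
Proof.
  intros H. destruct m1 as [|m'].
  - change (@sum_n_m C_AbelianMonoid a 0 m2) with (@sum_n C_AbelianMonoid a m2).
    rewrite <- csum_sum_n, Nat.sub_0_r. reflexivity.
  - rewrite (sum_n_m_sum_n (G:=C_AbelianGroup)) by lia. rewrite <- !csum_sum_n.
    replace (S m2) with (S m' + S (m2 - S m'))%nat by lia. rewrite csum_split.
    unfold minus, plus, opp; simpl. apply injective_projections; simpl; ring.
Qed.

Lemma ex_series_eventually_zero (D : nat -> R) n0 : (forall k, (n0 <= k)%nat -> D k = 0) -> ex_series D.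
Proof.
  intros H. apply (ex_series_incr_n D n0). exists 0.
  change (is_lim_seq (sum_n (fun k => D (n0 + k)%nat)) (Finite 0)).
  apply (is_lim_seq_ext (fun _ => 0)); [|apply is_lim_seq_const].
  intros m. induction m.
  - rewrite sum_O, H; auto; lia.
  - rewrite sum_Sn, <- IHm, H by lia. unfold plus; simpl. ring.
Qed.

Lemma tail_rsum_small (X : nat -> R) l : is_series X l -> forall eps, 0 < eps ->
  exists N0, forall n L, (N0 <= n)%nat -> Rabs (rsum (fun j => X (n + j)%nat) L) < eps.
Proof.
  intros HX eps He.
  destruct (proj1 (filterlim_locally (sum_n X) l) HX (mkposreal (eps / 2) ltac:(lra))) as [N HN].
  exists (S N). intros n L Hn. destruct n as [|n']; [lia|].
  assert (E : rsum (fun j => X (S n' + j)%nat) L = sum_n X (n' + L) - sum_n X n').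
  { rewrite <- !rsum_sum_n. replace (S (n' + L)) with (S n' + L)%nat by lia. rewrite rsum_split. ring. }
  rewrite E.
  pose proof (HN (n' + L)%nat ltac:(lia)) as H1. pose proof (HN n' ltac:(lia)) as H2.
  unfold ball in H1, H2; simpl in H1, H2. unfold AbsRing_ball, abs, minus, plus, opp in H1, H2; simpl in *.
  unfold Rabs in *. repeat destruct Rcase_abs; lra.
Qed.

Lemma is_series_nonneg_bounded (Z : nat -> R) B : (forall n, 0 <= Z n) ->
  (forall N, sum_n Z N <= B) -> exists l, is_series Z l /\ l <= B.
Proof.
  intros HZ0 HZB.
  destruct (ex_finite_lim_seq_incr (sum_n Z) B) as [l Hl]; auto.
  { intros n. rewrite sum_Sn. unfold plus; simpl. pose proof (HZ0 (S n)). lra. }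
  exists l. split; [exact Hl|].
  apply (is_lim_seq_le (sum_n Z) (fun _ => B) l B); auto. apply is_lim_seq_const.
Qed.

Lemma is_lim_seq_Cmod_sq (a : nat -> C) l : @is_series C_AbsRing C_NormedModule a l ->
  is_lim_seq (fun M => Cmod (@sum_n C_AbelianMonoid a M) ^ 2) (Cmod l ^ 2).
Proof.
  intros H.
  assert (H1 : is_lim_seq (fun M => Cmod (@sum_n C_AbelianMonoid a M)) (Cmod l)).
  { apply (filterlim_comp _ _ _ (sum_n a) Cmod eventually (locally l) (locally (Cmod l)) H).
    apply (filterlim_norm (K:=C_AbsRing) (V:=C_NormedModule) l). }
  apply (is_lim_seq_ext (fun M => Cmod (sum_n a M) * Cmod (sum_n a M))); [intros; ring|].
  replace (Cmod l ^ 2) with (Cmod l * Cmod l) by ring.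
  apply is_lim_seq_mult'; auto.
Qed.

Lemma rsum_Cmod_sq_series_le (a : nat -> nat -> C) (g : nat -> C) N B :
  (forall n, @is_series C_AbsRing C_NormedModule (a n) (g n)) ->
  (forall M, rsum (fun n => Cmod (csum (a n) (S M)) ^ 2) N <= B) ->
  rsum (fun n => Cmod (g n) ^ 2) N <= B.
Proof.
  intros Ha HB.
  assert (Hlim : is_lim_seq (fun M => rsum (fun n => Cmod (csum (a n) (S M)) ^ 2) N)
                            (rsum (fun n => Cmod (g n) ^ 2) N)).
  { clear HB. induction N; cbn [rsum]; [apply is_lim_seq_const|].
    apply (is_lim_seq_plus' _ _ _ _ IHN).
    apply (is_lim_seq_ext (fun M => Cmod (@sum_n C_AbelianMonoid (a N) M) ^ 2)).
    - intros M. rewrite csum_sum_n. reflexivity.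
    - apply is_lim_seq_Cmod_sq, Ha. }
  apply (is_lim_seq_le _ (fun _ => B) _ B HB Hlim (is_lim_seq_const B)).
Qed.

Lemma series_limits (a : nat -> bool -> nat -> C) :
  (forall n i, (1 <= n)%nat -> @ex_series C_AbsRing C_NormedModule (a n i)) ->
  exists g : nat -> bool -> C, forall n i, (1 <= n)%nat -> is_series (a n i) (g n i).
Proof.
  intros Ha.
  exists (fun n i => epsilon (inhabits (RtoC 0)) (fun l => @is_series C_AbsRing C_NormedModule (a n i) l)).
  intros n i Hn. apply epsilon_spec, Ha, Hn.
Qed.

Lemma csqrt_sq r : csqrt (Cmult r r) = r \/ csqrt (Cmult r r) = Copp r.
Proof.
  destruct r as [a b]. unfold csqrt, Cmult, Cmod, Copp, Re, Im; cbn [fst snd].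
  replace ((a * a - b * b) ^ 2 + (a * b + b * a) ^ 2) with ((a * a + b * b) * (a * a + b * b))
    by ring.
  rewrite sqrt_square by nra.
  replace ((a * a + b * b + (a * a - b * b)) / 2) with (a * a) by field.
  replace ((a * a + b * b - (a * a - b * b)) / 2) with (b * b) by field.
  rewrite <- !Rsqr_def, !sqrt_Rsqr_abs.
  destruct (Rlt_dec 0 (a * b + b * a)) as [H|H].
  - destruct (Rle_dec 0 a).
    + left. assert (0 < b) by nra. rewrite !Rabs_right by lra. auto.
    + right. assert (b < 0) by nra. rewrite !Rabs_left by lra. auto.
  - apply Rnot_lt_le in H. destruct (Rlt_dec 0 a).
    + left. assert (b <= 0) by nra. rewrite Rabs_right by lra.
      unfold Rabs; destruct Rcase_abs; f_equal; lra.
    + destruct (Req_dec a 0).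
      * subst. rewrite Rabs_R0. destruct (Rle_dec 0 b).
        -- right. rewrite (Rabs_right b) by lra. f_equal; lra.
        -- left. rewrite (Rabs_left b) by lra. f_equal; lra.
      * right. assert (0 <= b) by nra. rewrite Rabs_left by lra. rewrite Rabs_right by lra. auto.
Qed.

Lemma ccos_csqrt_sq r t : ccos (csqrt (Cmult r r)) t = ccos r t.
Proof. destruct (csqrt_sq r) as [E|E]; rewrite E; auto using ccos_opp. Qed.

Lemma Dt_sq x r s : Dt x (Cmult r r) (Cmult s s) = cint0 x (fun t => Cmult (ccos r t) (ccos s t)).
Proof.
  apply (RInt_ext (V:=C_R_CompleteNormedModule)). intros t _.
  change (Cmult (ccos (csqrt (Cmult r r)) t) (ccos (csqrt (Cmult s s)) t) =
          Cmult (ccos r t) (ccos s t)).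
  rewrite !ccos_csqrt_sq. reflexivity.
Qed.

(* Column [k] of [Q(x) T^-1 f] is [t |-> cos (rho_{ni} t)] integrated against this function. *)
Definition column (p : nat) (lam alpha : nat -> C) (f : nat -> bool -> C) (k : nat) (t : R) : C :=
  Cminus (Cmult (Cmult (alpha k) (ccos (rho lam k) t))
                (Cplus (Cmult (rhohat p lam k) (f k false)) (f k true)))
         (Cmult (Cmult (alpha_t p k) (ccos (rho_t p k) t)) (f k true)).

Definition column_sum p lam alpha f (M1 L : nat) (t : R) : C :=
  csum (fun j => column p lam alpha f (M1 + j) t) L.

Lemma Ccontinuous_column p lam alpha f k : Ccontinuous (column p lam alpha f k).
Proof. unfold column. Ccontinuous_tac. Qed.

Lemma Ccontinuous_column_sum p lam alpha f M1 L : Ccontinuous (column_sum p lam alpha f M1 L).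
Proof.
  apply (Ccontinuous_csum (fun j => column p lam alpha f (M1 + j))).
  intros; apply Ccontinuous_column.
Qed.

Lemma QTterm_cint0 p lam alpha x f n i k :
  QTterm p lam alpha x f n i k =
  cint0 x (fun t => Cmult (ccos (rhoi p lam n i) t) (column p lam alpha f k t)).
Proof.
  unfold QTterm, Qt, alphai, rhoi. rewrite !Dt_sq.
  set (u := ccos (if i then rho_t p n else rho lam n)).
  set (X := Cplus (Cmult (rhohat p lam k) (f k false)) (f k true)).
  assert (Hu : Ccontinuous u) by (unfold u; Ccontinuous_tac).
  rewrite <- !cint0_scal by Ccontinuous_tac.
  rewrite (Cmult_comm _ X), (Cmult_comm _ (f k true)).
  rewrite <- !cint0_scal, <- cint0_minus by Ccontinuous_tac.
  apply cint0_ext. intros t. unfold column. fold X. field.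
Qed.

Lemma csum_QTterm p lam alpha x f n i M1 L :
  csum (fun j => QTterm p lam alpha x f n i (M1 + j)) L =
  cint0 x (fun t => Cmult (ccos (rhoi p lam n i) t) (column_sum p lam alpha f M1 L t)).
Proof.
  rewrite (csum_ext _ (fun j => cint0 x (fun t => Cmult (ccos (rhoi p lam n i) t)
                                                       (column p lam alpha f (M1 + j) t))))
    by (intros; apply QTterm_cint0).
  rewrite <- (cint0_csum x (fun j t => Cmult (ccos (rhoi p lam n i) t)
                                             (column p lam alpha f (M1 + j) t))).
  - apply cint0_ext. intros t. unfold column_sum. rewrite csum_scal. reflexivity.
  - intros; pose proof (Ccontinuous_column p lam alpha f (M1 + k)); Ccontinuous_tac.
Qed.

Definition model_freq (p k : nat) : R := INR k - INR p - 1.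

Lemma rho_t_high p k : (p + 2 <= k)%nat -> rho_t p k = RtoC (model_freq p k).
Proof. intros H. unfold rho_t. destruct (Nat.leb_spec k (p + 1)); [lia|reflexivity]. Qed.
Lemma rho_t_low p k : (k <= p + 1)%nat -> rho_t p k = RtoC 0.
Proof. intros H. unfold rho_t. destruct (Nat.leb_spec k (p + 1)); [reflexivity|lia]. Qed.
Lemma alpha_t_high p k : (p + 2 <= k)%nat -> alpha_t p k = RtoC (2 / PI).
Proof.
  intros H. unfold alpha_t.
  destruct (Nat.eqb_spec k 1); [lia|]. destruct (Nat.leb_spec k (p + 1)); [lia|reflexivity].
Qed.
Lemma snd_rho_t p k : snd (rho_t p k) = 0.
Proof. unfold rho_t. destruct (Nat.leb k (p + 1)); reflexivity. Qed.

Lemma model_freq_shift p M1 j : (p + 2 <= M1)%nat ->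
  model_freq p (M1 + j) = INR (S (M1 - p - 2 + j)).
Proof.
  intros H. unfold model_freq. replace (M1 + j)%nat with (p + 1 + S (M1 - p - 2 + j))%nat by lia.
  rewrite !plus_INR. simpl (INR 1). ring.
Qed.

Lemma twoPI_pos : 0 < 2 / PI.
Proof. apply Rdiv_lt_0_compat; [lra|apply PI_RGT_0]. Qed.

Lemma Cmod_twoPI : Cmod (RtoC (2 / PI)) = 2 / PI.
Proof. rewrite Cmod_R. apply Rabs_right. pose proof twoPI_pos. lra. Qed.

Lemma Cmod_alpha_t_le p k : Cmod (alpha_t p k) <= 2 / PI.
Proof.
  pose proof PI_RGT_0. pose proof twoPI_pos. unfold alpha_t.
  destruct (Nat.eqb k 1); [|destruct (Nat.leb k (p + 1))].
  - rewrite Cmod_R, Rabs_right; [|apply Rle_ge, Rlt_le, Rdiv_lt_0_compat; lra].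
    unfold Rdiv. apply Rmult_le_compat_r; [apply Rlt_le, Rinv_0_lt_compat|]; lra.
  - rewrite Cmod_R, Rabs_R0. lra.
  - rewrite Cmod_twoPI. lra.
Qed.

Lemma xi_ge0 p lam alpha k : 0 <= xi p lam alpha k.
Proof.
  unfold xi. pose proof (Cmod_ge_0 (Cminus (rho lam k) (rho_t p k))).
  pose proof (Cmod_ge_0 (Cminus (alpha k) (alpha_t p k))). lra.
Qed.
Lemma Cmod_rhohat_le_xi p lam alpha k : Cmod (rhohat p lam k) <= xi p lam alpha k.
Proof. unfold xi, rhohat. pose proof (Cmod_ge_0 (Cminus (alpha k) (alpha_t p k))). lra. Qed.
Lemma Cmod_alpha_sub_le_xi p lam alpha k : Cmod (Cminus (alpha k) (alpha_t p k)) <= xi p lam alpha k.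
Proof. unfold xi. pose proof (Cmod_ge_0 (Cminus (rho lam k) (rho_t p k))). lra. Qed.
Lemma Rabs_snd_rho_le_xi p lam alpha k : Rabs (snd (rho lam k)) <= xi p lam alpha k.
Proof.
  eapply Rle_trans; [|apply (Cmod_rhohat_le_xi p lam alpha k)]. unfold rhohat.
  replace (snd (rho lam k)) with (snd (Cminus (rho lam k) (rho_t p k)))
    by (unfold Cminus, Cplus, Copp; cbn [snd]; rewrite snd_rho_t; ring).
  apply Rabs_snd_le_Cmod.
Qed.

Lemma Cmod_le_add_sub a b : Cmod a <= Cmod b + Cmod (Cminus a b).
Proof. replace a with (Cplus b (Cminus a b)) at 1 by field. apply Cmod_triangle. Qed.

Lemma Cmod_mult_le a b A B : Cmod a <= A -> Cmod b <= B -> Cmod (Cmult a b) <= A * B.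
Proof. intros. rewrite Cmod_mult. apply Rmult_le_compat; auto using Cmod_ge_0. Qed.

(** * Rows: Bessel's inequality for the perturbed cosines *)

Lemma Cmod_sq_plus_le a b : Cmod (Cplus a b) ^ 2 <= 2 * Cmod a ^ 2 + 2 * Cmod b ^ 2.
Proof.
  pose proof (Cmod_triangle a b). pose proof (Cmod_ge_0 (Cplus a b)).
  pose proof (Cmod_ge_0 a). pose proof (Cmod_ge_0 b). pose proof (pow2_ge_0 (Cmod a - Cmod b)).
  assert (Cmod (Cplus a b) ^ 2 <= (Cmod a + Cmod b) ^ 2) by (apply pow_incr; lra).
  nra.
Qed.

Section Rows.
Variable x : R.
Hypothesis Hx : 0 <= x <= PI.

Lemma Cmod_cint0_cos_mode_sq H j : Ccontinuous H ->
  Cmod (cint0 x (fun t => Cmult (RtoC (cos_mode j t)) (H t))) ^ 2 =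
  int0 x (fun t => fst (H t) * cos_mode j t) ^ 2 + int0 x (fun t => snd (H t) * cos_mode j t) ^ 2.
Proof.
  intros HH. unfold cos_mode. rewrite cint0_components by Ccontinuous_tac.
  rewrite Cmod2_alt. unfold Re, Im; cbn [fst snd].
  f_equal; f_equal; apply int0_ext; intros t; unfold Cmult, RtoC; cbn [fst snd]; ring.
Qed.

Lemma row_low_le H z Om : Ccontinuous H -> Rabs (snd z) <= Om ->
  Cmod (cint0 x (fun t => Cmult (ccos z t) (H t))) ^ 2
    <= 2 * (PI * ccos_bound Om ^ 2) * l2sq x H.
Proof.
  intros HH Hz.
  eapply Rle_trans; [apply Cmod_cint0_mult_sq_le; try lra; Ccontinuous_tac|].
  apply Rmult_le_compat_r; [apply l2sq_ge0; auto; lra|].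
  apply Rmult_le_compat_l; [lra|].
  eapply Rle_trans; [apply (l2sq_le_sup x ltac:(lra) _ (ccos_bound Om)); Ccontinuous_tac|].
  - intros t Ht. apply Cmod_ccos_le; auto; lra.
  - apply Rmult_le_compat_r; [apply pow2_ge_0|lra].
Qed.

(* Split [cos ((j+1+kap) t)] as [cos ((j+1) t)] plus an [O(|kap|)] perturbation. *)
Lemma row_high_le H j (kap : C) Om : Ccontinuous H -> Cmod kap <= Om ->
  Cmod (cint0 x (fun t => Cmult (ccos (Cplus (RtoC (INR (S j))) kap) t) (H t))) ^ 2
    <= 2 * (int0 x (fun t => fst (H t) * cos_mode j t) ^ 2 +
            int0 x (fun t => snd (H t) * cos_mode j t) ^ 2)
       + 4 * PI * taylor1_const Om ^ 2 * Cmod kap ^ 2 * l2sq x H.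
Proof.
  intros HH Hk. pose proof PI_RGT_0. pose proof (l2sq_ge0 x ltac:(lra) H HH).
  set (c := fun t => RtoC (cos_mode j t)).
  set (v := fun t => Cminus (ccos (Cplus (RtoC (INR (S j))) kap) t) (c t)).
  assert (Hc : Ccontinuous c) by (unfold c, cos_mode; Ccontinuous_tac).
  assert (Hv : Ccontinuous v) by (unfold v; Ccontinuous_tac).
  rewrite (cint0_ext _ _ (fun t => Cplus (Cmult (c t) (H t)) (Cmult (v t) (H t))))
    by (intros t; unfold v; field).
  rewrite cint0_plus by Ccontinuous_tac.
  eapply Rle_trans; [apply Cmod_sq_plus_le|].
  apply Rplus_le_compat.
  - unfold c. rewrite Cmod_cint0_cos_mode_sq; auto. lra.
  - assert (l2sq x v <= PI * (taylor1_const Om * Cmod kap) ^ 2).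
    { eapply Rle_trans; [apply (l2sq_le_sup x ltac:(lra) v (taylor1_const Om * Cmod kap)); auto|].
      - intros t Ht. unfold v, c, cos_mode. apply ccos_taylor1; [lra|auto].
      - apply Rmult_le_compat_r; [apply pow2_ge_0|lra]. }
    pose proof (Cmod_cint0_mult_sq_le x ltac:(lra) v H Hv HH).
    assert (2 * l2sq x v * l2sq x H <= 2 * (PI * (taylor1_const Om * Cmod kap) ^ 2) * l2sq x H)
      by (apply Rmult_le_compat_r; lra).
    lra.
Qed.

Lemma rows_high_le H (kap : nat -> C) L Om : Ccontinuous H ->
  (forall j, Cmod (kap j) <= Om) -> rsum (fun j => Cmod (kap j) ^ 2) L <= Om ^ 2 ->
  rsum (fun j => Cmod (cint0 x (fun t => Cmult (ccos (Cplus (RtoC (INR (S j))) (kap j)) t) (H t))) ^ 2) L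
   <= (PI + 4 * PI * taylor1_const Om ^ 2 * Om ^ 2) * l2sq x H.
Proof.
  intros HH Hk HL. pose proof PI_RGT_0.
  eapply Rle_trans; [apply rsum_le; intros j _; apply (row_high_le H j (kap j) Om HH (Hk j))|].
  set (C4 := 4 * PI * taylor1_const Om ^ 2 * l2sq x H).
  rewrite (rsum_ext _ (fun j => 2 * int0 x (fun t => fst (H t) * cos_mode j t) ^ 2
                               + 2 * int0 x (fun t => snd (H t) * cos_mode j t) ^ 2
                               + C4 * Cmod (kap j) ^ 2)) by (intros; unfold C4; ring).
  rewrite !rsum_plus, !rsum_scal.
  pose proof (bessel_int0 cos_mode orth_system_cos x (fun t => fst (H t)) L Hx (proj1 HH)).
  pose proof (bessel_int0 cos_mode orth_system_cos x (fun t => snd (H t)) L Hx (proj2 HH)).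
  assert (0 <= C4).
  { unfold C4. pose proof (pow2_ge_0 (taylor1_const Om)). pose proof (l2sq_ge0 x ltac:(lra) H HH).
    apply Rmult_le_pos; [|lra]. nra. }
  assert (C4 * rsum (fun j => Cmod (kap j) ^ 2) L <= C4 * Om ^ 2) by (apply Rmult_le_compat_l; auto).
  replace ((PI + 4 * PI * taylor1_const Om ^ 2 * Om ^ 2) * l2sq x H)
    with (PI / 2 * (2 * l2sq x H) + C4 * Om ^ 2) by (unfold C4; field).
  unfold l2sq in *. lra.
Qed.

End Rows.

(** * Columns near the model data *)

Definition col_a p lam alpha f k : C :=
  Cplus (Cmult (Cmult (alpha k) (rhohat p lam k)) (f k false))
        (Cmult (Cminus (alpha k) (alpha_t p k)) (f k true)).
Definition col_d p f k : C := Cmult (alpha_t p k) (f k true).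
Definition col_rem p lam alpha f k t : C :=
  Cplus (Cmult (col_a p lam alpha f k) (Cminus (ccos (rho lam k) t) (RtoC (cos (model_freq p k * t)))))
        (Cmult (col_d p f k) (Cplus (Cminus (ccos (rho lam k) t) (RtoC (cos (model_freq p k * t))))
                                    (Cmult (rhohat p lam k) (RtoC (t * sin (model_freq p k * t)))))).

Lemma Ccontinuous_col_rem p lam alpha f k : Ccontinuous (col_rem p lam alpha f k).
Proof. unfold col_rem. Ccontinuous_tac. Qed.

Lemma rho_high p lam k : (p + 2 <= k)%nat -> rho lam k = Cplus (RtoC (model_freq p k)) (rhohat p lam k).
Proof. intros H. unfold rhohat. rewrite (rho_t_high p k H). field. Qed.

Lemma column_high p lam alpha f k t : (p + 2 <= k)%nat ->
  column p lam alpha f k t =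
  Cplus (Cplus (Cmult (col_a p lam alpha f k) (RtoC (cos (model_freq p k * t))))
               (Cmult (Copp (Cmult (col_d p f k) (rhohat p lam k))) (RtoC (t * sin (model_freq p k * t)))))
        (col_rem p lam alpha f k t).
Proof.
  intros H. unfold column, col_rem, col_a, col_d. rewrite (rho_t_high p k H), ccos_real.
  unfold rhohat. rewrite (rho_t_high p k H). field.
Qed.

Definition coef_const (Om : R) : R := 2 / PI + Om + 1.
Definition rem_const (Om : R) : R := coef_const Om * taylor1_const Om + 2 / PI * taylor2_const Om.
Definition col_high_const (Om : R) : R :=
  3 * (PI / 2 * coef_const Om ^ 2 + PI ^ 3 / 2 * (2 / PI) ^ 2 + PI * rem_const Om ^ 2 * Om ^ 2).
Definition col_sup_const (Om : R) : R :=
  (2 / PI + Om) * ccos_bound Om * (Om + 1) + 2 / PI * ccos_bound Om.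
Definition row_const (p : nat) (Om : R) : R :=
  INR (S p) * (2 * (PI * ccos_bound Om ^ 2)) + (PI + 4 * PI * taylor1_const Om ^ 2 * Om ^ 2).
Definition total_const (p : nat) (Om : R) : R :=
  row_const p Om * (2 * PI * (INR (S p) * col_sup_const Om) ^ 2 + 2 * col_high_const Om * Om ^ 2).

Lemma rem_const_ge0 Om : 0 <= Om -> 0 <= rem_const Om.
Proof.
  intros HOm. unfold rem_const, coef_const. pose proof twoPI_pos.
  pose proof (taylor1_const_ge0 Om HOm). pose proof (taylor2_const_ge0 Om HOm). nra.
Qed.
Lemma col_high_const_ge0 Om : 0 <= col_high_const Om.
Proof.
  unfold col_high_const. pose proof PI_RGT_0. pose proof (pow_lt PI 3 H).
  pose proof (pow2_ge_0 (coef_const Om)). pose proof (pow2_ge_0 (2 / PI)).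
  pose proof (pow2_ge_0 (rem_const Om)). pose proof (pow2_ge_0 Om).
  assert (0 <= PI * rem_const Om ^ 2 * Om ^ 2) by (apply Rmult_le_pos; [apply Rmult_le_pos|]; lra).
  nra.
Qed.
Lemma col_sup_const_ge0 Om : 0 <= Om -> 0 <= col_sup_const Om.
Proof.
  intros HOm. unfold col_sup_const, ccos_bound. pose proof twoPI_pos. pose proof (exp_pos (PI * Om)).
  assert (0 <= (2 / PI + Om) * (2 * exp (PI * Om)) * (Om + 1))
    by (apply Rmult_le_pos; [apply Rmult_le_pos|]; lra).
  nra.
Qed.
Lemma row_const_ge0 p Om : 0 <= row_const p Om.
Proof.
  unfold row_const. pose proof PI_RGT_0. pose proof (pos_INR (S p)).
  pose proof (pow2_ge_0 (ccos_bound Om)). pose proof (pow2_ge_0 (taylor1_const Om)).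
  pose proof (pow2_ge_0 Om).
  assert (0 <= 4 * PI * taylor1_const Om ^ 2 * Om ^ 2)
    by (apply Rmult_le_pos; [apply Rmult_le_pos; [apply Rmult_le_pos|]|]; lra).
  assert (0 <= 2 * (PI * ccos_bound Om ^ 2)) by (apply Rmult_le_pos; [lra|apply Rmult_le_pos; lra]).
  assert (0 <= INR (S p) * (2 * (PI * ccos_bound Om ^ 2))) by (apply Rmult_le_pos; lra).
  lra.
Qed.
Lemma total_const_ge0 p Om : 0 <= total_const p Om.
Proof.
  unfold total_const. apply Rmult_le_pos; [apply row_const_ge0|].
  pose proof PI_RGT_0. pose proof (col_high_const_ge0 Om).
  pose proof (pow2_ge_0 (INR (S p) * col_sup_const Om)). pose proof (pow2_ge_0 Om). nra.
Qed.

Section Bounded_data.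
Variables (p : nat) (Om : R) (lam alpha : nat -> C).
Hypothesis HOm : 0 < Om.
Hypothesis Hxi_le : forall k, (1 <= k)%nat -> xi p lam alpha k <= Om.
Hypothesis Hxi_sum : forall M1 L, (1 <= M1)%nat -> rsum (fun j => xi p lam alpha (M1 + j) ^ 2) L <= Om ^ 2.
Hypothesis Hxi_series : ex_series (fun k => xi p lam alpha k ^ 2).
Variable x : R.
Hypothesis Hx : 0 <= x <= PI.

(* Rows [n <= p + 1] are bounded one by one; the others are [cos ((j + 1 + kap_j) t)]
   with [kap] in [l2], so Bessel's inequality applies. *)
Lemma rows_le i H N : Ccontinuous H ->
  rsum (fun n => Cmod (cint0 x (fun t => Cmult (ccos (rhoi p lam (S n) i) t) (H t))) ^ 2) N
    <= row_const p Om * l2sq x H.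
Proof.
  intros HH.
  set (g := fun n => Cmod (cint0 x (fun t => Cmult (ccos (rhoi p lam (S n) i) t) (H t))) ^ 2).
  eapply Rle_trans; [apply (rsum_le_length g N (S p + N)); [intros; apply pow2_ge_0|lia]|].
  rewrite rsum_split. unfold row_const. rewrite Rmult_plus_distr_r.
  apply Rplus_le_compat.
  - rewrite Rmult_assoc, <- rsum_const. apply rsum_le. intros n Hn.
    unfold g. apply (row_low_le x Hx H _ Om HH). destruct i; unfold rhoi.
    + rewrite snd_rho_t, Rabs_R0. lra.
    + pose proof (Rabs_snd_rho_le_xi p lam alpha (S n)). pose proof (Hxi_le (S n) ltac:(lia)). lra.
  - set (kap := fun j => Cminus (rhoi p lam (p + 2 + j) i) (rho_t p (p + 2 + j))).
    assert (Hk : forall j, Cmod (kap j) <= xi p lam alpha (p + 2 + j)).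
    { intros j. unfold kap, rhoi. destruct i.
      - replace (Cminus (rho_t p (p + 2 + j)) (rho_t p (p + 2 + j))) with (RtoC 0) by field.
        rewrite Cmod_0. apply xi_ge0.
      - apply Cmod_rhohat_le_xi. }
    assert (Hk2 : forall j, Cmod (kap j) <= Om).
    { intros j. pose proof (Hk j). pose proof (Hxi_le (p + 2 + j)%nat ltac:(lia)). lra. }
    assert (HkL : rsum (fun j => Cmod (kap j) ^ 2) N <= Om ^ 2).
    { eapply Rle_trans; [|apply (Hxi_sum (p + 2)%nat N); lia]. apply rsum_le. intros j _.
      apply pow_incr. split; [apply Cmod_ge_0|apply Hk]. }
    eapply Rle_trans; [|apply (rows_high_le x Hx H kap N Om HH Hk2 HkL)].
    right. apply rsum_ext. intros j _. unfold g.
    replace (S (S p + j)) with (p + 2 + j)%nat by lia.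
    replace (rhoi p lam (p + 2 + j) i) with (Cplus (RtoC (INR (S j))) (kap j)); [reflexivity|].
    unfold kap. rewrite (rho_t_high p (p + 2 + j)), model_freq_shift by lia.
    replace (p + 2 - p - 2 + j)%nat with j by lia. field.
Qed.

Variables (f : nat -> bool -> C) (Fm : R).
Hypothesis HFm : 0 <= Fm.
Hypothesis Hf : forall k i, (1 <= k)%nat -> Cmod (f k i) <= Fm.

Lemma Cmod_col_a_le k : (p + 2 <= k)%nat ->
  Cmod (col_a p lam alpha f k) <= coef_const Om * Fm * xi p lam alpha k.
Proof.
  intros Hk. pose proof twoPI_pos.
  pose proof (Cmod_rhohat_le_xi p lam alpha k). pose proof (Cmod_alpha_sub_le_xi p lam alpha k).
  pose proof (Hxi_le k ltac:(lia)). pose proof (Hf k false ltac:(lia)). pose proof (Hf k true ltac:(lia)).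
  set (X := xi p lam alpha k) in *.
  assert (Ha : Cmod (alpha k) <= 2 / PI + X).
  { eapply Rle_trans; [apply (Cmod_le_add_sub (alpha k) (alpha_t p k))|].
    rewrite alpha_t_high, Cmod_twoPI in * by lia. lra. }
  unfold col_a. eapply Rle_trans; [apply Cmod_triangle|].
  pose proof (Cmod_mult_le _ _ _ _ (Cmod_mult_le _ _ _ _ Ha H0) H3).
  pose proof (Cmod_mult_le _ _ _ _ H1 H4).
  assert (0 <= X) by apply xi_ge0.
  assert (0 <= (Om - X) * (X * Fm)) by (apply Rmult_le_pos; [lra|apply Rmult_le_pos; lra]).
  unfold coef_const.
  replace ((2 / PI + Om + 1) * Fm * X) with ((2 / PI + X) * X * Fm + X * Fm + (Om - X) * (X * Fm))
    by ring.
  lra.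
Qed.

Lemma Cmod_col_d_le k : (p + 2 <= k)%nat -> Cmod (col_d p f k) <= 2 / PI * Fm.
Proof.
  intros Hk. unfold col_d. rewrite alpha_t_high by lia.
  apply Cmod_mult_le; [rewrite Cmod_twoPI; lra|apply Hf; lia].
Qed.

Lemma Cmod_col_rem_le k t : (p + 2 <= k)%nat -> 0 <= t <= PI ->
  Cmod (col_rem p lam alpha f k t) <= rem_const Om * Fm * xi p lam alpha k ^ 2.
Proof.
  intros Hk Ht. pose proof twoPI_pos.
  pose proof (Cmod_col_a_le k Hk) as Ha. pose proof (Cmod_col_d_le k Hk) as Hd.
  pose proof (Cmod_rhohat_le_xi p lam alpha k). pose proof (Hxi_le k ltac:(lia)).
  set (X := xi p lam alpha k) in *. set (r := rhohat p lam k) in *.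
  assert (Hr : Cmod r <= Om) by lra.
  pose proof (Cmod_ge_0 r). pose proof (xi_ge0 p lam alpha k). fold X in H3.
  pose proof (taylor1_const_ge0 Om ltac:(lra)). pose proof (taylor2_const_ge0 Om ltac:(lra)).
  unfold col_rem. rewrite (rho_high p lam k Hk). fold r.
  eapply Rle_trans; [apply Cmod_triangle|].
  pose proof (Cmod_mult_le _ _ _ _ Ha (ccos_taylor1 (model_freq p k) r t Om Ht Hr)).
  pose proof (Cmod_mult_le _ _ _ _ Hd (ccos_taylor2 (model_freq p k) r t Om Ht Hr)).
  assert (coef_const Om * Fm * X * (taylor1_const Om * Cmod r)
          <= coef_const Om * taylor1_const Om * Fm * X ^ 2).
  { replace (coef_const Om * taylor1_const Om * Fm * X ^ 2)
      with (coef_const Om * Fm * X * (taylor1_const Om * X)) by ring.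
    apply Rmult_le_compat_l; [unfold coef_const; apply Rmult_le_pos; [apply Rmult_le_pos|]; lra|].
    apply Rmult_le_compat_l; lra. }
  assert (2 / PI * Fm * (taylor2_const Om * Cmod r ^ 2) <= 2 / PI * taylor2_const Om * Fm * X ^ 2).
  { replace (2 / PI * taylor2_const Om * Fm * X ^ 2) with (2 / PI * Fm * (taylor2_const Om * X ^ 2))
      by ring.
    apply Rmult_le_compat_l; [apply Rmult_le_pos; lra|].
    apply Rmult_le_compat_l; [lra|]. apply pow_incr; lra. }
  unfold rem_const. lra.
Qed.

(* Expand each column to first order in [rhohat] and use orthogonality of the
   [cos ((j+1) t)] and of the [sin ((j+1) t)]. *)
Lemma l2sq_column_sum_high M1 L : (p + 2 <= M1)%nat ->
  l2sq x (column_sum p lam alpha f M1 L)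
    <= col_high_const Om * Fm ^ 2 * rsum (fun j => xi p lam alpha (M1 + j) ^ 2) L.
Proof.
  intros HM. pose proof twoPI_pos. pose proof PI_RGT_0.
  set (s := (M1 - p - 2)%nat).
  set (A := fun j => col_a p lam alpha f (M1 + j)).
  set (B := fun j => Copp (Cmult (col_d p f (M1 + j)) (rhohat p lam (M1 + j)))).
  set (X := fun j => xi p lam alpha (M1 + j)).
  set (S := rsum (fun j => X j ^ 2) L).
  assert (HS0 : 0 <= S) by (apply rsum_ge0; intros; apply pow2_ge_0).
  assert (HSO : S <= Om ^ 2) by (apply Hxi_sum; lia).
  rewrite (l2sq_ext x _ (fun t => csum (fun j => Cplus (Cplus (Cmult (A j) (RtoC (cos_mode (s + j) t)))
                                 (Cmult (B j) (RtoC (t * sin_mode (s + j) t))))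
                                 (col_rem p lam alpha f (M1 + j) t)) L)).
  2: { intros t. apply csum_ext. intros j _. rewrite column_high by lia.
       unfold A, B, cos_mode, sin_mode, s. rewrite model_freq_shift by lia. reflexivity. }
  eapply Rle_trans.
  { apply (l2sq_decomp_le x _ _ A B _ (fun j => rem_const Om * Fm * X j ^ 2) L Hx).
    - apply orth_system_shift, orth_system_cos.
    - apply orth_system_shift, orth_system_sin.
    - intros; apply Ccontinuous_col_rem.
    - intros j t Ht. apply Cmod_col_rem_le; lia || lra. }
  assert (SA : rsum (fun j => Cmod (A j) ^ 2) L <= coef_const Om ^ 2 * Fm ^ 2 * S).
  { unfold S. rewrite <- rsum_scal. apply rsum_le. intros j _.
    replace (coef_const Om ^ 2 * Fm ^ 2 * X j ^ 2) with ((coef_const Om * Fm * X j) ^ 2) by ring.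
    apply pow_incr. split; [apply Cmod_ge_0|apply Cmod_col_a_le; lia]. }
  assert (SB : rsum (fun j => Cmod (B j) ^ 2) L <= (2 / PI) ^ 2 * Fm ^ 2 * S).
  { unfold S. rewrite <- rsum_scal. apply rsum_le. intros j _.
    replace ((2 / PI) ^ 2 * Fm ^ 2 * X j ^ 2) with ((2 / PI * Fm * X j) ^ 2) by ring.
    apply pow_incr. split; [apply Cmod_ge_0|]. unfold B. rewrite Cmod_opp.
    apply Cmod_mult_le; [apply Cmod_col_d_le; lia|apply Cmod_rhohat_le_xi]. }
  assert (SE : rsum (fun j => rem_const Om * Fm * X j ^ 2) L ^ 2 <= rem_const Om ^ 2 * Fm ^ 2 * Om ^ 2 * S).
  { rewrite rsum_scal. fold S. pose proof (rem_const_ge0 Om ltac:(lra)).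
    replace ((rem_const Om * Fm * S) ^ 2) with (rem_const Om ^ 2 * Fm ^ 2 * (S * S)) by ring.
    rewrite (Rmult_assoc _ (Om ^ 2)).
    apply Rmult_le_compat_l; [apply Rmult_le_pos; apply pow2_ge_0|].
    apply Rmult_le_compat_r; lra. }
  unfold col_high_const. change (rsum (fun j => xi p lam alpha (M1 + j) ^ 2) L) with S.
  assert (PI / 2 * rsum (fun j => Cmod (A j) ^ 2) L <= PI / 2 * (coef_const Om ^ 2 * Fm ^ 2 * S))
    by (apply Rmult_le_compat_l; lra).
  assert (PI ^ 3 / 2 * rsum (fun j => Cmod (B j) ^ 2) L <= PI ^ 3 / 2 * ((2 / PI) ^ 2 * Fm ^ 2 * S))
    by (apply Rmult_le_compat_l; [pose proof (pow_lt PI 3 H0); lra|auto]).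
  assert (PI * rsum (fun j => rem_const Om * Fm * X j ^ 2) L ^ 2
          <= PI * (rem_const Om ^ 2 * Fm ^ 2 * Om ^ 2 * S)) by (apply Rmult_le_compat_l; lra).
  match goal with |- _ <= ?rhs => replace rhs with
    (3 * (PI / 2 * (coef_const Om ^ 2 * Fm ^ 2 * S) + PI ^ 3 / 2 * ((2 / PI) ^ 2 * Fm ^ 2 * S)
          + PI * (rem_const Om ^ 2 * Fm ^ 2 * Om ^ 2 * S))) by ring end.
  lra.
Qed.

Lemma Cmod_column_le k t : (1 <= k)%nat -> 0 <= t <= PI ->
  Cmod (column p lam alpha f k t) <= col_sup_const Om * Fm.
Proof.
  intros Hk Ht. pose proof twoPI_pos.
  pose proof (Hxi_le k Hk). pose proof (Cmod_rhohat_le_xi p lam alpha k).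
  pose proof (Cmod_alpha_sub_le_xi p lam alpha k).
  pose proof (Hf k false Hk). pose proof (Hf k true Hk). pose proof (Cmod_alpha_t_le p k).
  assert (Ha : Cmod (alpha k) <= 2 / PI + Om).
  { eapply Rle_trans; [apply (Cmod_le_add_sub (alpha k) (alpha_t p k))|]. lra. }
  assert (Hc1 : Cmod (ccos (rho lam k) t) <= ccos_bound Om).
  { apply Cmod_ccos_le; auto. pose proof (Rabs_snd_rho_le_xi p lam alpha k). lra. }
  assert (Hc2 : Cmod (ccos (rho_t p k) t) <= ccos_bound Om).
  { apply Cmod_ccos_le; auto. rewrite snd_rho_t, Rabs_R0. lra. }
  assert (HX : Cmod (Cplus (Cmult (rhohat p lam k) (f k false)) (f k true)) <= (Om + 1) * Fm).
  { eapply Rle_trans; [apply Cmod_triangle|].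
    pose proof (Cmod_mult_le (rhohat p lam k) (f k false) Om Fm ltac:(lra) H3). lra. }
  unfold column, Cminus. eapply Rle_trans; [apply Cmod_triangle|]. rewrite Cmod_opp.
  pose proof (Cmod_mult_le _ _ _ _ (Cmod_mult_le _ _ _ _ Ha Hc1) HX).
  pose proof (Cmod_mult_le _ _ _ _ (Cmod_mult_le _ _ _ _ H5 Hc2) H4).
  unfold col_sup_const. lra.
Qed.

Lemma l2sq_column_sum_le_sup L :
  l2sq x (column_sum p lam alpha f 1 L) <= PI * (INR L * (col_sup_const Om * Fm)) ^ 2.
Proof.
  eapply Rle_trans.
  - apply (l2sq_le_sup x ltac:(lra) _ (INR L * (col_sup_const Om * Fm))).
    + apply Ccontinuous_column_sum.
    + intros t Ht. eapply Rle_trans; [apply Cmod_csum_le|].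
      rewrite <- rsum_const. apply rsum_le. intros. apply Cmod_column_le; lia || lra.
  - apply Rmult_le_compat_r; [apply pow2_ge_0|lra].
Qed.

Lemma l2sq_column_sum_le M :
  l2sq x (column_sum p lam alpha f 1 M)
    <= (2 * PI * (INR (S p) * col_sup_const Om) ^ 2 + 2 * col_high_const Om * Om ^ 2) * Fm ^ 2.
Proof.
  pose proof PI_RGT_0. pose proof (col_high_const_ge0 Om).
  pose proof (col_sup_const_ge0 Om ltac:(lra)).
  replace ((2 * PI * (INR (S p) * col_sup_const Om) ^ 2 + 2 * col_high_const Om * Om ^ 2) * Fm ^ 2)
    with (2 * (PI * (INR (S p) * (col_sup_const Om * Fm)) ^ 2) + 2 * (col_high_const Om * Fm ^ 2 * Om ^ 2))
    by ring.
  assert (0 <= col_high_const Om * Fm ^ 2 * Om ^ 2)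
    by (apply Rmult_le_pos; [apply Rmult_le_pos|]; auto; apply pow2_ge_0).
  assert (Hlow : forall L, (L <= S p)%nat ->
            l2sq x (column_sum p lam alpha f 1 L) <= PI * (INR (S p) * (col_sup_const Om * Fm)) ^ 2).
  { intros L HL. eapply Rle_trans; [apply l2sq_column_sum_le_sup|].
    apply Rmult_le_compat_l; [lra|]. apply pow_incr. split.
    - apply Rmult_le_pos; [apply pos_INR|apply Rmult_le_pos; lra].
    - apply Rmult_le_compat_r; [apply Rmult_le_pos; lra|apply le_INR; auto]. }
  destruct (le_lt_dec M (S p)) as [HM|HM].
  - pose proof (Hlow M HM). pose proof (pow2_ge_0 (INR (S p) * (col_sup_const Om * Fm))). nra.
  - replace M with (S p + (M - S p))%nat by lia.
    rewrite (l2sq_ext x _ (fun t => Cplus (column_sum p lam alpha f 1 (S p) t)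
                                           (column_sum p lam alpha f (p + 2) (M - S p) t))).
    2: { intros t. unfold column_sum. rewrite csum_split. f_equal. apply csum_ext. intros.
         f_equal. lia. }
    eapply Rle_trans; [apply l2sq_plus_le; try lra; apply Ccontinuous_column_sum|].
    pose proof (Hlow (S p) (le_n _)).
    pose proof (l2sq_column_sum_high (p + 2) (M - S p) ltac:(lia)).
    pose proof (Hxi_sum (p + 2)%nat (M - S p)%nat ltac:(lia)).
    assert (col_high_const Om * Fm ^ 2 * rsum (fun j => xi p lam alpha (p + 2 + j) ^ 2) (M - S p)
            <= col_high_const Om * Fm ^ 2 * Om ^ 2)
      by (apply Rmult_le_compat_l; auto; apply Rmult_le_pos; auto; apply pow2_ge_0).
    lra.
Qed.

Lemma Cmod_csum_QTterm_sq_le n i M1 L : (p + 2 <= M1)%nat ->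
  Cmod (csum (fun j => QTterm p lam alpha x f (S n) i (M1 + j)) L) ^ 2
    <= row_const p Om * (col_high_const Om * Fm ^ 2 * rsum (fun j => xi p lam alpha (M1 + j) ^ 2) L).
Proof.
  intros HM. rewrite csum_QTterm.
  eapply Rle_trans; [|eapply Rle_trans].
  2: apply (rows_le i (column_sum p lam alpha f M1 L) (S n)), Ccontinuous_column_sum.
  - simpl. match goal with |- _ <= ?r + _ => assert (0 <= r) by (apply rsum_ge0; intros; apply pow2_ge_0) end.
    lra.
  - apply Rmult_le_compat_l; [apply row_const_ge0|]. apply l2sq_column_sum_high; auto.
Qed.

Lemma rsum_partial_rows_le i M N :
  rsum (fun n => Cmod (csum (fun j => QTterm p lam alpha x f (S n) i (1 + j)) M) ^ 2) N
    <= total_const p Om * Fm ^ 2.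
Proof.
  rewrite (rsum_ext _ (fun n => Cmod (cint0 x (fun t => Cmult (ccos (rhoi p lam (S n) i) t)
                                                          (column_sum p lam alpha f 1 M t))) ^ 2))
    by (intros; rewrite csum_QTterm; reflexivity).
  eapply Rle_trans; [apply rows_le, Ccontinuous_column_sum|].
  unfold total_const. rewrite Rmult_assoc.
  apply Rmult_le_compat_l; [apply row_const_ge0|apply l2sq_column_sum_le].
Qed.

(* Cauchy criterion: a block of the row is controlled by the corresponding block of
   the convergent series [sum xi_k^2]. *)
Lemma ex_series_row n i :
  @ex_series C_AbsRing C_NormedModule (fun k => QTterm p lam alpha x f (S n) i (S k)).
Proof.
  destruct Hxi_series as [l HY].
  apply (ex_series_Cauchy (V:=C_CompleteNormedModule)). intros eps.
  set (K := row_const p Om * (col_high_const Om * Fm ^ 2)).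
  assert (HK : 0 <= K) by (apply Rmult_le_pos; [apply row_const_ge0|];
                           apply Rmult_le_pos; [apply col_high_const_ge0|apply pow2_ge_0]).
  assert (He : 0 < eps) by apply cond_pos.
  assert (He2 : 0 < eps ^ 2 / (K + 1)) by (apply Rdiv_lt_0_compat; [apply pow_lt|]; lra).
  destruct (tail_rsum_small _ l HY _ He2) as [N0 HN0].
  exists (Nat.max N0 (S p)). intros m1 m2 Hm1 Hm2.
  destruct (le_lt_dec m1 m2) as [Hle|Hlt]; [|rewrite sum_n_m_zero, norm_zero by auto; auto].
  rewrite sum_n_m_csum by auto. set (L := S (m2 - m1)).
  change (Cmod (csum (fun j => QTterm p lam alpha x f (S n) i (S m1 + j)) L) < eps).
  pose proof (Cmod_csum_QTterm_sq_le n i (S m1) L ltac:(lia)) as Hblock.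
  pose proof (HN0 (S m1) L ltac:(lia)) as Htail.
  set (r := rsum (fun j => xi p lam alpha (S m1 + j) ^ 2) L) in *.
  assert (Hr0 : 0 <= r) by (apply rsum_ge0; intros; apply pow2_ge_0).
  rewrite Rabs_right in Htail by lra.
  assert (K * r <= K * (eps ^ 2 / (K + 1))) by (apply Rmult_le_compat_l; lra).
  assert (K * (eps ^ 2 / (K + 1)) < eps ^ 2).
  { replace (eps ^ 2) with ((K + 1) * (eps ^ 2 / (K + 1))) at 2 by (field; lra). nra. }
  replace (row_const p Om * (col_high_const Om * Fm ^ 2 * r)) with (K * r) in Hblock
    by (unfold K; ring).
  apply Rsqr_incrst_0; [rewrite !Rsqr_pow2; lra|apply Cmod_ge_0|lra].
Qed.

End Bounded_data.

Lemma norm_m_spec f : in_m f ->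
  0 <= norm_m f /\ forall k i, (1 <= k)%nat -> Cmod (f k i) <= norm_m f.
Proof.
  intros [M HM]. unfold norm_m.
  set (E := fun r => exists n i, (1 <= n)%nat /\ r = Cmod (f n i)).
  destruct (Lub_Rbar_correct E) as [Hub Hlub].
  assert (Hle : Rbar_le (Lub_Rbar E) M).
  { apply Hlub. intros r [n [i [Hn ->]]]. simpl. apply HM; auto. }
  assert (Hge : Rbar_le (Cmod (f 1%nat false)) (Lub_Rbar E)) by (apply Hub; exists 1%nat, false; auto).
  destruct (Lub_Rbar E) as [r| |]; simpl in *; try contradiction.
  split; [pose proof (Cmod_ge_0 (f 1%nat false)); lra|].
  intros k i Hk. assert (Rbar_le (Cmod (f k i)) (Finite r)) by (apply Hub; exists k, i; auto).
  auto.
Qed.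

Lemma Cmod_sub_sq_le a b c :
  Cmod (Cminus a c) ^ 2 <= 2 * Cmod (Cminus a b) ^ 2 + 2 * Cmod (Cminus b c) ^ 2.
Proof.
  replace (Cminus a c) with (Cplus (Cminus a b) (Cminus b c)) by field. apply Cmod_sq_plus_le.
Qed.

(* [xi_n] differs from the distance to [(n - p - 1, 2/PI)] only for [n <= p + 1]. *)
Lemma ex_series_xi_sq p lam alpha : in_Sp p lam alpha -> ex_series (fun n => xi p lam alpha (S n) ^ 2).
Proof.
  intros [HA HB].
  set (A := fun n => Cmod (Cminus (rho lam (S n)) (RtoC (INR (S n) - INR p - 1))) ^ 2) in HA.
  set (B := fun n => Cmod (Cminus (alpha (S n)) (RtoC (2 / PI))) ^ 2) in HB.
  set (D := fun n => Cmod (Cminus (RtoC (INR (S n) - INR p - 1)) (rho_t p (S n))) ^ 2).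
  set (E := fun n => Cmod (Cminus (RtoC (2 / PI)) (alpha_t p (S n))) ^ 2).
  assert (HD : ex_series D).
  { apply (ex_series_eventually_zero D p). intros k Hk. unfold D.
    destruct (Nat.eq_dec k p) as [->|Hne].
    - rewrite rho_t_low by lia. replace (INR (S p) - INR p - 1) with 0 by (rewrite S_INR; ring).
      replace (Cminus (RtoC 0) (RtoC 0)) with (RtoC 0) by field. rewrite Cmod_0. ring.
    - rewrite rho_t_high by lia. unfold model_freq.
      replace (Cminus (RtoC (INR (S k) - INR p - 1)) (RtoC (INR (S k) - INR p - 1))) with (RtoC 0)
        by field.
      rewrite Cmod_0. ring. }
  assert (HE : ex_series E).
  { apply (ex_series_eventually_zero E (S p)). intros k Hk. unfold E.
    rewrite alpha_t_high by lia. replace (Cminus (RtoC (2 / PI)) (RtoC (2 / PI))) with (RtoC 0) by field.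
    rewrite Cmod_0. ring. }
  apply (ex_series_le (K:=R_AbsRing) (V:=R_CompleteNormedModule) _
           (fun n => 4 * (A n + D n + B n + E n))).
  - intros n. change (norm (xi p lam alpha (S n) ^ 2)) with (Rabs (xi p lam alpha (S n) ^ 2)).
    rewrite Rabs_right by (apply Rle_ge, pow2_ge_0). unfold xi.
    pose proof (Cmod_sub_sq_le (rho lam (S n)) (RtoC (INR (S n) - INR p - 1)) (rho_t p (S n))).
    pose proof (Cmod_sub_sq_le (alpha (S n)) (RtoC (2 / PI)) (alpha_t p (S n))).
    set (a := Cmod (Cminus (rho lam (S n)) (rho_t p (S n)))) in *.
    set (b := Cmod (Cminus (alpha (S n)) (alpha_t p (S n)))) in *.
    pose proof (pow2_ge_0 (a - b)). unfold A, B, D, E. nra.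
  - apply (ex_series_scal_l (K:=R_AbsRing) (V:=R_NormedModule)).
    repeat apply (ex_series_plus (K:=R_AbsRing) (V:=R_NormedModule)); auto.
Qed.

Section In_B.
Variables (p : nat) (Om : R) (lam alpha : nat -> C).
Hypothesis HOm : 0 < Om.
Hypothesis HB : in_B p Om lam alpha.

Lemma in_B_xi_sum_le M1 L : (1 <= M1)%nat -> rsum (fun j => xi p lam alpha (M1 + j) ^ 2) L <= Om ^ 2.
Proof.
  intros HM. destruct HB as [HS Hsq].
  set (X := fun n => xi p lam alpha (S n) ^ 2).
  assert (HX : ex_series X) by (apply ex_series_xi_sq; auto).
  assert (HX0 : forall k, 0 <= X k) by (intros; apply pow2_ge_0).
  assert (HSer0 : 0 <= Series X) by (rewrite <- (rsum_zero 0); apply (rsum_window_le_Series X 0 0); auto).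
  rewrite (rsum_ext _ (fun j => X (M1 - 1 + j)%nat)) by (intros; unfold X; do 3 f_equal; lia).
  eapply Rle_trans; [apply rsum_window_le_Series; auto|].
  rewrite <- (sqrt_sqrt (Series X)) by auto. rewrite <- Rsqr_pow2.
  apply Rsqr_incr_1; auto; [apply sqrt_pos|lra].
Qed.

Lemma in_B_xi_le k : (1 <= k)%nat -> xi p lam alpha k <= Om.
Proof.
  intros Hk. pose proof (in_B_xi_sum_le k 1 Hk). simpl in H. rewrite Nat.add_0_r, Rplus_0_l in H.
  pose proof (xi_ge0 p lam alpha k). apply Rsqr_incr_0_var; [rewrite !Rsqr_pow2|]; lra.
Qed.

End In_B.

Lemma l2_of_rsum_le (g : nat -> bool -> C) B :
  (forall i N, rsum (fun n => Cmod (g (S n) i) ^ 2) N <= B) ->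
  in_l2 g /\ norm_l2 g <= sqrt (2 * B).
Proof.
  intros HgB.
  set (Z := fun n => Cmod (g (S n) false) ^ 2 + Cmod (g (S n) true) ^ 2).
  destruct (is_series_nonneg_bounded Z (2 * B)) as [l [Hl HlB]].
  - intros n. unfold Z. pose proof (pow2_ge_0 (Cmod (g (S n) false))).
    pose proof (pow2_ge_0 (Cmod (g (S n) true))). lra.
  - intros N. rewrite <- rsum_sum_n. unfold Z. rewrite rsum_plus.
    pose proof (HgB false (S N)). pose proof (HgB true (S N)). lra.
  - split; [exists l; exact Hl|].
    unfold norm_l2. fold Z. rewrite (is_series_unique Z l Hl). apply sqrt_le_1_alt, HlB.
Qed.

Theorem lemma3p3 (p : nat) (Om : R) (HOm : 0 < Om) :
  exists K : R,
    forall (lam alpha : nat -> C),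
      in_B p Om lam alpha ->
      forall x : R, 0 <= x <= PI ->
      forall f : nat -> bool -> C, in_m f ->
        exists g : nat -> bool -> C,
          (forall n i, (1 <= n)%nat ->
             is_series (fun k => QTterm p lam alpha x f n i (S k)) (g n i)) /\
          in_l2 g /\
          norm_l2 g <= K * norm_m f.
Proof.
  exists (sqrt (2 * total_const p Om)).
  intros lam alpha HB x Hx f Hm.
  destruct (norm_m_spec f Hm) as [HFm Hf].
  pose proof (in_B_xi_le p Om lam alpha HOm HB) as Hxi_le.
  pose proof (in_B_xi_sum_le p Om lam alpha HOm HB) as Hxi_sum.
  assert (Hxi_series : ex_series (fun k => xi p lam alpha k ^ 2))
    by (apply ex_series_incr_1, ex_series_xi_sq, HB).
  destruct (series_limits (fun n i k => QTterm p lam alpha x f n i (S k))) as [g Hg].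
  { intros [|n] i Hn; [lia|].
    exact (ex_series_row p Om lam alpha HOm Hxi_le Hxi_sum Hxi_series x Hx f _ HFm Hf n i). }
  exists g. split; [exact Hg|].
  destruct (l2_of_rsum_le g (total_const p Om * norm_m f ^ 2)) as [Hl2 Hnorm].
  - intros i N. apply (rsum_Cmod_sq_series_le (fun n k => QTterm p lam alpha x f (S n) i (S k))).
    + intros n. apply Hg. lia.
    + intros M. exact (rsum_partial_rows_le p Om lam alpha HOm Hxi_le Hxi_sum x Hx f _ HFm Hf i (S M) N).
  - split; [exact Hl2|]. eapply Rle_trans; [exact Hnorm|].
    pose proof (total_const_ge0 p Om).
    replace (2 * (total_const p Om * norm_m f ^ 2)) with (2 * total_const p Om * norm_m f ^ 2) by ring.
    rewrite sqrt_mult_alt, sqrt_pow2 by lra. lra.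
Qed.
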